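(* Fix $n\ge 2$, $q\in\{1,\dots,n\}$ and $c\in(0,1/2)$. For every $\varepsilon>0$ and $\eta>0$ there is an integer $R$ such that for all $r\ge R$ and all integers $p$ with $0\le p\le r-n$ and $c\le p/r\le 1-c$, \[ \mathbf{P}\left(\left|\frac{k_{p,q}(\mathrm{B}_r)}{\binom{r-n}{p}\,\mu(r,p)}-1\right|>\varepsilon\right)<\eta. \] In other words, for any sequence $\{p_r\}$ with $c\le p_r/r\le 1-c$, $k_{p_r,q}(\mathrm{B}_r)/\big(\binom{r-n}{p_r}\mu(r,p_r)\big)\to 1$ in probability as $r\to\infty$, uniformly in $p_r$.
   Context: Fix an integer $n\ge 2$. For an integer $r\ge n$ write $[r]=\{1,\dots,r\}$ and $\binom{[r]}{n-1}$ for the set of $(n-1)$-element subsets of $[r]$; elements are written $I=\{i_1<\dots<i_{n-1}\}$. A Betti table is an array of real numbers $k_{p,q}$ with columns $p=0,\dots,r-n$ and rows $q=1,\dots,n$. For $I\in\binom{[r]}{n-1}$ write $[r]\setminus I=\{d_0<d_1<\dots<d_{r-n}\}$; the pure diagram $\pi(r,I)$ is the Betti table with $k_{p,q}(\pi(r,I))=0$ if $q\neq d_p-p$, and $k_{p,d_p-p}(\pi(r,I)) = (r-n)!\cdot\prod_{0\le \ell\le r-n,\ \ell\neq p}\frac{1}{|d_\ell-d_p|}$. Let $\{\mathrm{X}_I\}_{I\in\binom{[r]}{n-1}}$ be independent random variables, each uniformly distributed on $[0,1]$, and let $\mathrm{B}_r=\sum_{I}\mathrm{X}_I\,\pi(r,I)$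 be the random Betti table, so $k_{p,q}(\mathrm{B}_r)=\sum_I \mathrm{X}_I\,k_{p,q}(\pi(r,I))$. For fixed $n$ and $q\in[1,n]$ put \[ \mu(r,p)=\frac{1}{2^n}\cdot\frac{p^{q-1}(r-p-n)^{n-q}}{(q-1)!\,(n-q)!}. \] *)

From Stdlib Require Import Reals Arith List Binomial.
Import ListNotations.
Open Scope R_scope.

Fixpoint choose (k : nat) (l : list nat) : list (list nat) :=
  match k, l with
  | O, _ => [ [] ]
  | S _, [] => []
  | S k', x :: l' => map (cons x) (choose k' l') ++ choose k l'
  end.

Definition subsets_r (r n : nat) : list (list nat) := choose (n - 1) (seq 1 r).

(* [r] \ I = {d_0 < d_1 < ... < d_{r-n}} *)
Definition compl_r (r : nat) (I : list nat) : list nat :=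
  filter (fun j => negb (existsb (Nat.eqb j) I)) (seq 1 r).

(* k_{p,q}(pi(r,I)) for 0 <= p <= r-n, 1 <= q <= n. *)
Definition pure_entry (r n p q : nat) (I : list nat) : R :=
  let d := compl_r r I in
  let dp := nth p d O in
  if Nat.eqb q (dp - p)%nat then
    INR (fact (r - n)) *
    fold_right Rmult 1
      (map (fun l => if Nat.eqb l p then 1
                     else / Rabs (INR (nth l d O) - INR dp))
           (seq 0 (r - n + 1)))
  else 0.

(* k_{p,q}(B_r) = sum_I X_I k_{p,q}(pi(r,I)); the random vector is x : nat -> R,
   x j being X_{I_j} where I_j is the j-th element of subsets_r r n. *)
Definition betti_rand (r n p q : nat) (x : nat -> R) : R :=
  let S := subsets_r r n in
  fold_right Rplus 0
    (map (fun j => x j * pure_entry r n p q (nth j S [])) (seq 0 (length S))).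

Definition mu (n q r p : nat) : R :=
  / 2 ^ n * (INR p ^ (q - 1) * INR (r - p - n) ^ (n - q))
    / (INR (fact (q - 1)) * INR (fact (n - q))).

(* Probability of an event for N i.i.d. uniform [0,1] variables, i.e. the
   Lebesgue (= Jordan) measure of the event in [0,1]^N, computed as the limit
   of the proportion of the m^N midpoints of the grid cells of side 1/m that
   lie in the event. *)
Fixpoint tuples (m N : nat) : list (list nat) :=
  match N with
  | O => [ [] ]
  | S N' => flat_map (fun g => map (cons g) (tuples m N')) (seq 0 m)
  end.

Definition grid_point (m : nat) (g : list nat) : nat -> R :=
  fun j => (INR (nth j g O) + / 2) / INR m.

Definition grid_frac (N : nat) (E : (nat -> R) -> bool) (m : nat) : R :=
  INR (length (filter (fun g => E (grid_point m g)) (tuples m N))) / INR m ^ N.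

Definition is_prob (N : nat) (E : (nat -> R) -> bool) (l : R) : Prop :=
  Un_cv (fun m => grid_frac N E (S m)) l.

Definition dev_event (r n p q : nat) (eps : R) : (nat -> R) -> bool :=
  fun x => if Rlt_dec eps
                (Rabs (betti_rand r n p q x / (C (r - n) p * mu n q r p) - 1))
           then true else false.

(* Write w_I := k_{p,q}(pi(r, I)) >= 0, so that k_{p,q}(B_r) = sum_I X_I w_I has mean (sum_I w_I)/2
   and variance (sum_I w_I^2)/12 <= (max_I w_I) (sum_I w_I)/12.  By Chebyshev it suffices that
   (sum_I w_I)/2 ~ K := C(r-n, p) mu(r, p) and max_I w_I = o(K).

   Column p of pi(r, I) lives in row d_p - p, so w_I <> 0 iff D := p + q is not in I and exactly q - 1
   elements of I lie below D; then w_I = (r-n)!/((D-1)! (r-D)!) prod_{i in I} |i - D|.  Summing,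
   sum_I w_I = (r-n)!/((D-1)! (r-D)!) e_{q-1}(1, ..., D-1) e_{n-q}(1, ..., r-D) with e_k the elementary
   symmetric polynomials, and the bounds (S - k M)^k <= k! e_k <= S^k (for numbers in [0, M] with sum S)
   give e_k(1, ..., x) ~ (x^2/2)^k / k!, hence the mean, as soon as p and r - n - p are of order r.
   Moreover w_I <= (r-n)!/((D-1)! (r-D)!) r^{n-1}, which is O(r^{1-n}) K.

   The probability of an event of [0,1]^N is the limit of the proportion of grid midpoints lying in it.
   For {|L/K - 1| > eps} with L linear with nonnegative weights, this proportion is an affine combination
   of those of two events that are upward closed in L; coordinate by coordinate these are midpoint
   Riemann sums of monotone functions, so the proportions form a Cauchy sequence. *)

From Stdlib Require Import Reals Arith List Binomial Lia Lra.
Import ListNotations.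
Open Scope R_scope.

Lemma Rabs_le_bounds x a : Rabs x <= a -> - a <= x <= a.
Proof. intros H. split; [generalize (Rle_abs (- x)); rewrite Rabs_Ropp | generalize (Rle_abs x)]; lra. Qed.

Lemma Rinv_nonneg x : 0 <= x -> 0 <= / x.
Proof. intros H. destruct (Req_dec x 0) as [->|H']; [rewrite Rinv_0; lra|].
  apply Rlt_le, Rinv_0_lt_compat; lra. Qed.

Definition sumR {A} (l : list A) (f : A -> R) : R := fold_right Rplus 0 (map f l).
Definition prodR {A} (l : list A) (f : A -> R) : R := fold_right Rmult 1 (map f l).

Section ListSums.
Context {A : Type}.
Implicit Types (l : list A) (f g : A -> R).

Lemma sumR_nil f : sumR [] f = 0. Proof. reflexivity. Qed.
Lemma sumR_cons a l f : sumR (a :: l) f = f a + sumR l f. Proof. reflexivity. Qed.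

Lemma sumR_app l1 l2 f : sumR (l1 ++ l2) f = sumR l1 f + sumR l2 f.
Proof. induction l1 as [|a l1 IH]; simpl app; [rewrite sumR_nil; ring|].
  rewrite !sumR_cons, IH; ring. Qed.

Lemma sumR_ext l f g : (forall x, In x l -> f x = g x) -> sumR l f = sumR l g.
Proof. intros H; unfold sumR; now rewrite (map_ext_in f g l H). Qed.

Lemma sumR_plus l f g : sumR l (fun x => f x + g x) = sumR l f + sumR l g.
Proof. induction l as [|a l IH]; [unfold sumR; simpl; ring|]. rewrite !sumR_cons, IH; ring. Qed.

Lemma sumR_minus l f g : sumR l (fun x => f x - g x) = sumR l f - sumR l g.
Proof. induction l as [|a l IH]; [unfold sumR; simpl; ring|]. rewrite !sumR_cons, IH; ring. Qed.

Lemma sumR_scal l c f : sumR l (fun x => c * f x) = c * sumR l f.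
Proof. induction l as [|a l IH]; [unfold sumR; simpl; ring|]. rewrite !sumR_cons, IH; ring. Qed.

Lemma sumR_div l c f : sumR l (fun x => f x / c) = sumR l f / c.
Proof. unfold Rdiv. rewrite Rmult_comm, <- sumR_scal. apply sumR_ext; intros; ring. Qed.

Lemma sumR_const l c : sumR l (fun _ => c) = INR (length l) * c.
Proof. induction l as [|a l IH]; [unfold sumR; simpl; ring|].
  rewrite sumR_cons, IH; simpl length; rewrite S_INR; ring. Qed.

Lemma sumR_le l f g : (forall x, In x l -> f x <= g x) -> sumR l f <= sumR l g.
Proof. induction l as [|a l IH]; intros H; [unfold sumR; simpl; lra|]. rewrite !sumR_cons.
  apply Rplus_le_compat; [apply H; now left | apply IH; intros; apply H; now right]. Qed.

Lemma sumR_nonneg l f : (forall x, In x l -> 0 <= f x) -> 0 <= sumR l f.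
Proof. intros H. replace 0 with (sumR l (fun _ => 0)) by (rewrite sumR_const; ring).
  now apply sumR_le. Qed.

Lemma sumR_abs l f : Rabs (sumR l f) <= sumR l (fun x => Rabs (f x)).
Proof. induction l as [|a l IH]; [unfold sumR; simpl; rewrite Rabs_R0; lra|]. rewrite !sumR_cons.
  eapply Rle_trans; [apply Rabs_triang | lra]. Qed.

Lemma length_filter_sumR (P : A -> bool) l :
  INR (length (filter P l)) = sumR l (fun x => if P x then 1 else 0).
Proof. induction l as [|a l IH]; [reflexivity|]. rewrite sumR_cons. simpl filter.
  destruct (P a); [simpl length; rewrite S_INR, IH; ring | rewrite IH; ring]. Qed.

Lemma markov_count (P : A -> bool) l f e :
  (forall x, In x l -> P x = true -> e <= f x) -> (forall x, In x l -> 0 <= f x) -> 0 <= e ->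
  e * sumR l (fun x => if P x then 1 else 0) <= sumR l f.
Proof. intros H1 H2 He. rewrite <- sumR_scal. apply sumR_le; intros x Hx.
  destruct (P x) eqn:E; [rewrite Rmult_1_r; auto | rewrite Rmult_0_r; auto]. Qed.

Lemma prodR_nil f : prodR [] f = 1. Proof. reflexivity. Qed.
Lemma prodR_cons a l f : prodR (a :: l) f = f a * prodR l f. Proof. reflexivity. Qed.

Lemma prodR_app l1 l2 f : prodR (l1 ++ l2) f = prodR l1 f * prodR l2 f.
Proof. induction l1 as [|a l1 IH]; simpl app; [rewrite prodR_nil; ring|].
  rewrite !prodR_cons, IH; ring. Qed.

Lemma prodR_ext l f g : (forall x, In x l -> f x = g x) -> prodR l f = prodR l g.
Proof. intros H; unfold prodR; now rewrite (map_ext_in f g l H). Qed.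

Lemma prodR_nonneg l f : (forall x, In x l -> 0 <= f x) -> 0 <= prodR l f.
Proof. induction l as [|a l IH]; intros H; [unfold prodR; simpl; lra|]. rewrite prodR_cons.
  apply Rmult_le_pos; [apply H; now left | apply IH; intros; apply H; now right]. Qed.

Lemma prodR_pos l f : (forall x, In x l -> 0 < f x) -> 0 < prodR l f.
Proof. induction l as [|a l IH]; intros H; [unfold prodR; simpl; lra|]. rewrite prodR_cons.
  apply Rmult_lt_0_compat; [apply H; now left | apply IH; intros; apply H; now right]. Qed.

Lemma prodR_le_pow l f M : (forall x, In x l -> 0 <= f x <= M) -> prodR l f <= M ^ length l.
Proof. induction l as [|a l IH]; intros H; [unfold prodR; simpl; lra|]. rewrite prodR_cons.
  simpl length; simpl pow. assert (Ha := H a (or_introl eq_refl)).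
  apply Rmult_le_compat; try lra; [apply prodR_nonneg | apply IH]; intros; apply H; now right. Qed.

Lemma prodR_inv l f : prodR l (fun x => / f x) = / prodR l f.
Proof. induction l as [|a l IH]; [unfold prodR; simpl; now rewrite Rinv_1|].
  rewrite !prodR_cons, IH. now rewrite Rinv_mult. Qed.

End ListSums.

Lemma prodR_map {A B} (l : list A) (h : A -> B) (g : B -> R) : prodR (map h l) g = prodR l (fun a => g (h a)).
Proof. unfold prodR. now rewrite map_map. Qed.

Lemma sumR_flat_map {A B} (l : list A) (h : A -> list B) (g : B -> R) :
  sumR (flat_map h l) g = sumR l (fun a => sumR (h a) g).
Proof. induction l as [|a l IH]; [reflexivity|]. simpl flat_map. rewrite sumR_app, sumR_cons, IH; ring. Qed.

Lemma sumR_map {A B} (l : list A) (h : A -> B) (g : B -> R) : sumR (map h l) g = sumR l (fun a => g (h a)).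
Proof. unfold sumR. now rewrite map_map. Qed.


Lemma sumR_seq_S f k : sumR (seq 0 (S k)) f = sumR (seq 0 k) f + f k.
Proof. rewrite seq_S, sumR_app, sumR_cons, sumR_nil. simpl. ring. Qed.

Lemma sumR_seq_shift (f : nat -> R) N : sumR (seq 0 (S N)) f = f O + sumR (seq 0 N) (fun j => f (S j)).
Proof. simpl seq. now rewrite sumR_cons, <- seq_shift, sumR_map. Qed.

Lemma sumR_nth {A} (d : list A) (z : A) f : sumR d f = sumR (seq 0 (length d)) (fun l => f (nth l d z)).
Proof. induction d as [|x d IH]; [reflexivity|]. simpl length; simpl seq.
  now rewrite !sumR_cons, IH, <- seq_shift, sumR_map. Qed.

Lemma prodR_nth (d : list nat) f : prodR d f = prodR (seq 0 (length d)) (fun l => f (nth l d O)).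
Proof. induction d as [|x d IH]; [reflexivity|]. simpl length; simpl seq.
  now rewrite !prodR_cons, IH, <- seq_shift, prodR_map. Qed.

Lemma sumR_telescope h k : sumR (seq 0 k) (fun a => h (S a) - h a) = h k - h O.
Proof. induction k as [|k IH]; [unfold sumR; simpl; ring|]. rewrite sumR_seq_S, IH; ring. Qed.

Lemma sumR_seq_mul_div a b h : (b <> 0)%nat ->
  sumR (seq 0 (a * b)) (fun i => h (i / b)%nat) = INR b * sumR (seq 0 a) h.
Proof. intros Hb. induction a as [|a IH]; [unfold sumR; simpl; ring|].
  rewrite Nat.mul_succ_l, seq_app, sumR_app, IH, sumR_seq_S.
  rewrite (sumR_ext (seq (0 + a * b) b) _ (fun _ => h a)), sumR_const, length_seq; [ring|].
  intros i Hi. apply in_seq in Hi. f_equal.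
  replace i with (a * b + (i - a * b))%nat by lia.
  rewrite Nat.div_add_l, Nat.div_small by lia. lia. Qed.

Lemma sumR_tuples_S m N (f : list nat -> R) :
  sumR (tuples m (S N)) f = sumR (seq 0 m) (fun a => sumR (tuples m N) (fun g => f (a :: g))).
Proof. simpl tuples. rewrite sumR_flat_map. apply sumR_ext; intros a _. apply sumR_map. Qed.

Lemma sumR_tuples_one m N : sumR (tuples m N) (fun _ => 1) = INR m ^ N.
Proof. induction N as [|N IH]; [unfold sumR; simpl; ring|]. rewrite sumR_tuples_S.
  rewrite (sumR_ext _ _ (fun _ => INR m ^ N)) by (intros; apply IH).
  rewrite sumR_const, length_seq. simpl; ring. Qed.

Lemma in_tuples_length m N g : In g (tuples m N) -> length g = N.
Proof. revert g; induction N as [|N IH]; intros g Hg; simpl in Hg.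
  - now destruct Hg as [<-|[]].
  - apply in_flat_map in Hg. destruct Hg as [a [_ Ha]]. apply in_map_iff in Ha.
    destruct Ha as [g' [<- Hg']]. simpl; f_equal; auto. Qed.

Definition midpoint (m a : nat) : R := (INR a + / 2) / INR m.

Fixpoint grid_comb (w : nat -> R) (m : nat) (g : list nat) : R :=
  match g with
  | [] => 0
  | a :: g' => w O * midpoint m a + grid_comb (fun j => w (S j)) m g'
  end.

Lemma grid_comb_grid_point (w : nat -> R) m g :
  fold_right Rplus 0 (map (fun j => grid_point m g j * w j) (seq 0 (length g))) = grid_comb w m g.
Proof. revert w; induction g as [|a g IH]; intros w; [reflexivity|].
  change (sumR (seq 0 (length (a :: g))) (fun j => grid_point m (a :: g) j * w j) = grid_comb w m (a :: g)).
  simpl length. rewrite sumR_seq_shift. simpl grid_comb. rewrite <- (IH (fun j => w (S j))).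
  unfold grid_point, midpoint. simpl. unfold sumR. ring. Qed.

Definition upward_closed (H : R -> bool) := forall y z, y <= z -> H y = true -> H z = true.

(* The shift [t] is what makes the recursion over the first coordinate possible. *)
Definition grid_mass (H : R -> bool) (w : nat -> R) (t : R) (m N : nat) : R :=
  sumR (tuples m N) (fun g => if H (t + grid_comb w m g) then 1 else 0) / INR m ^ N.

Lemma grid_mass_S H w t m N : (1 <= m)%nat ->
  grid_mass H w t m (S N) =
  sumR (seq 0 m) (fun a => grid_mass H (fun j => w (S j)) (t + w O * midpoint m a) m N) / INR m.
Proof. intros Hm. assert (0 < INR m) by (apply lt_0_INR; lia).
  unfold grid_mass. rewrite sumR_tuples_S, <- !sumR_div.
  apply sumR_ext; intros a _. rewrite <- !sumR_div.
  apply sumR_ext; intros g _. simpl grid_comb. rewrite Rplus_assoc.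
  simpl pow. field. split; [apply pow_nonzero|]; lra. Qed.

Lemma grid_mass_bounds H w t m N : (1 <= m)%nat -> 0 <= grid_mass H w t m N <= 1.
Proof. intros Hm. assert (0 < INR m ^ N) by (apply pow_lt, lt_0_INR; lia). unfold grid_mass. split.
  - apply Rmult_le_pos; [apply sumR_nonneg; intros; destruct H; lra | apply Rlt_le, Rinv_0_lt_compat; lra].
  - apply (Rmult_le_reg_r (INR m ^ N)); [lra|].
    unfold Rdiv. rewrite Rmult_assoc, Rinv_l, Rmult_1_r, Rmult_1_l by lra.
    rewrite <- sumR_tuples_one. apply sumR_le; intros; destruct H; lra. Qed.

Lemma grid_mass_mono H w t t' m N : (1 <= m)%nat ->
  upward_closed H -> t <= t' -> grid_mass H w t m N <= grid_mass H w t' m N.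
Proof. intros Hm HH Ht. unfold grid_mass, Rdiv. apply Rmult_le_compat_r.
  - apply Rlt_le, Rinv_0_lt_compat, pow_lt, lt_0_INR; lia.
  - apply sumR_le; intros g _. destruct (H (t + _)) eqn:E1.
    + rewrite (HH _ _ (Rplus_le_compat_r _ _ _ Ht) E1); lra.
    + destruct (H (t' + _)); lra. Qed.

Definition riemann_sum (m : nat) (s : R) (f : R -> R) : R :=
  sumR (seq 0 m) (fun a => f ((INR a + s) / INR m)) / INR m.

Definition monotone01 (f : R -> R) := forall x y, 0 <= x -> x <= y -> y <= 1 -> f x <= f y.
Definition bounded01 (f : R -> R) := forall x, 0 <= x <= 1 -> 0 <= f x <= 1.

Lemma riemann_sum_shift_mono f m s s' : monotone01 f -> (1 <= m)%nat -> 0 <= s <= s' -> s' <= 1 ->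
  riemann_sum m s f <= riemann_sum m s' f.
Proof. intros Hf Hm Hs Hs'. assert (0 < INR m) by (apply lt_0_INR; lia).
  unfold riemann_sum, Rdiv. apply Rmult_le_compat_r; [apply Rlt_le, Rinv_0_lt_compat; lra|].
  apply sumR_le; intros a Ha. apply in_seq in Ha.
  assert (INR a + 1 <= INR m) by (rewrite <- S_INR; apply le_INR; lia).
  assert (0 <= INR a) by apply pos_INR.
  apply Hf; [apply Rmult_le_pos; [lra | apply Rlt_le, Rinv_0_lt_compat; lra]
    | apply Rmult_le_compat_r; [apply Rlt_le, Rinv_0_lt_compat; lra | lra] |].
  apply (Rmult_le_reg_r (INR m)); [lra|]. rewrite Rmult_assoc, Rinv_l; lra. Qed.

Lemma riemann_right_sub_left f m : bounded01 f -> (1 <= m)%nat ->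
  riemann_sum m 1 f - riemann_sum m 0 f <= / INR m.
Proof. intros Hb Hm. assert (0 < INR m) by (apply lt_0_INR; lia).
  unfold riemann_sum. rewrite <- Rdiv_minus_distr, <- sumR_minus.
  set (h := fun k => f (INR k / INR m)).
  rewrite (sumR_ext _ _ (fun a => h (S a) - h a)) by (intros; unfold h; now rewrite S_INR, Rplus_0_r).
  rewrite sumR_telescope. unfold h. simpl INR.
  replace (INR m / INR m) with 1 by (field; lra). replace (0 / INR m) with 0 by (field; lra).
  destruct (Hb 1) as [_ H1]; [lra|]. destruct (Hb 0) as [H0 _]; [lra|].
  unfold Rdiv. rewrite <- (Rmult_1_l (/ INR m)) at 2.
  apply Rmult_le_compat_r; [apply Rlt_le, Rinv_0_lt_compat|]; lra. Qed.

(* Both sums are refined to the common grid of mesh 1/(m m'). *)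
Lemma riemann_left_le_right f m m' : monotone01 f -> (1 <= m)%nat -> (1 <= m')%nat ->
  riemann_sum m 0 f <= riemann_sum m' 1 f.
Proof. intros Hf Hm Hm'. assert (0 < INR m) by (apply lt_0_INR; lia).
  assert (0 < INR m') by (apply lt_0_INR; lia).
  assert (Hmm : 0 < INR m * INR m') by (apply Rmult_lt_0_compat; lra).
  apply (Rmult_le_reg_r (INR m * INR m')); [lra|]. unfold riemann_sum.
  replace (sumR (seq 0 m) (fun a => f ((INR a + 0) / INR m)) / INR m * (INR m * INR m'))
    with (INR m' * sumR (seq 0 m) (fun a => f ((INR a + 0) / INR m))) by (field; lra).
  replace (sumR (seq 0 m') (fun a => f ((INR a + 1) / INR m')) / INR m' * (INR m * INR m'))
    with (INR m * sumR (seq 0 m') (fun a => f ((INR a + 1) / INR m'))) by (field; lra).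
  rewrite <- (sumR_seq_mul_div m m' (fun a => f ((INR a + 0) / INR m))) by lia.
  rewrite <- (sumR_seq_mul_div m' m (fun a => f ((INR a + 1) / INR m'))) by lia.
  rewrite (Nat.mul_comm m' m). apply sumR_le; intros i Hi. apply in_seq in Hi.
  assert (A1 : (m' * (i / m') <= i)%nat) by apply Nat.Div0.mul_div_le.
  assert (A2 : (i < m * S (i / m))%nat) by (apply Nat.mul_succ_div_gt; lia).
  assert (A3 : (S (i / m) <= m')%nat) by (apply Nat.Div0.div_lt_upper_bound; lia).
  assert (A4 : (i < m * m')%nat) by lia.
  apply le_INR in A1; apply lt_INR in A2; apply le_INR in A3; apply lt_INR in A4.
  rewrite mult_INR in A1, A2, A4. rewrite S_INR in A2, A3.
  assert (0 <= INR (i / m')) by apply pos_INR. assert (0 <= INR i) by apply pos_INR.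
  assert (Ei : INR i / (INR m * INR m') * (INR m * INR m') = INR i) by (field; lra).
  apply Rle_trans with (f (INR i / (INR m * INR m'))); apply Hf.
  - apply Rmult_le_pos; [lra | apply Rlt_le, Rinv_0_lt_compat; lra].
  - apply (Rmult_le_reg_r (INR m * INR m')); [lra|]. rewrite Ei.
    replace ((INR (i / m') + 0) / INR m * (INR m * INR m')) with (INR m' * INR (i / m')) by (field; lra). lra.
  - apply (Rmult_le_reg_r (INR m * INR m')); [lra|]. rewrite Ei. lra.
  - apply Rmult_le_pos; [lra | apply Rlt_le, Rinv_0_lt_compat; lra].
  - apply (Rmult_le_reg_r (INR m * INR m')); [lra|]. rewrite Ei.
    replace ((INR (i / m) + 1) / INR m' * (INR m * INR m')) with (INR m * (INR (i / m) + 1))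
      by (field; lra). lra.
  - apply (Rmult_le_reg_r (INR m')); [lra|].
    replace ((INR (i / m) + 1) / INR m' * INR m') with (INR (i / m) + 1) by (field; lra). lra.
Qed.

Lemma riemann_mid_cauchy f m m' : monotone01 f -> bounded01 f -> (1 <= m)%nat -> (1 <= m')%nat ->
  Rabs (riemann_sum m (/ 2) f - riemann_sum m' (/ 2) f) <= / INR m + / INR m'.
Proof. intros Hf Hb Hm Hm'.
  assert (L := riemann_sum_shift_mono f m 0 (/ 2) Hf Hm ltac:(lra) ltac:(lra)).
  assert (U := riemann_sum_shift_mono f m (/ 2) 1 Hf Hm ltac:(lra) ltac:(lra)).
  assert (L' := riemann_sum_shift_mono f m' 0 (/ 2) Hf Hm' ltac:(lra) ltac:(lra)).
  assert (U' := riemann_sum_shift_mono f m' (/ 2) 1 Hf Hm' ltac:(lra) ltac:(lra)).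
  assert (W := riemann_right_sub_left f m Hb Hm). assert (W' := riemann_right_sub_left f m' Hb Hm').
  assert (X := riemann_left_le_right f m m' Hf Hm Hm').
  assert (X' := riemann_left_le_right f m' m Hf Hm' Hm).
  apply Rabs_le; lra. Qed.

Lemma avg_close (m : nat) g1 g2 e : (1 <= m)%nat -> (forall a, (a < m)%nat -> Rabs (g1 a - g2 a) <= e) ->
  Rabs (sumR (seq 0 m) g1 / INR m - sumR (seq 0 m) g2 / INR m) <= e.
Proof. intros Hm H. assert (0 < INR m) by (apply lt_0_INR; lia).
  rewrite <- Rdiv_minus_distr, <- sumR_minus. unfold Rdiv.
  rewrite Rabs_mult, Rabs_inv, (Rabs_pos_eq (INR m)) by lra.
  apply (Rmult_le_reg_r (INR m)); [lra|]. rewrite Rmult_assoc, Rinv_l, Rmult_1_r by lra.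
  eapply Rle_trans; [apply sumR_abs|]. rewrite <- (length_seq m 0) at 2. rewrite Rmult_comm, <- sumR_const.
  apply sumR_le; intros a Ha; apply in_seq in Ha; apply H; lia. Qed.

(* Induction on the dimension: the first coordinate turns [grid_mass] into a midpoint Riemann sum of
   a monotone function of the shift, and the remaining coordinates converge uniformly in the shift. *)
Lemma grid_mass_cauchy N : forall w H, (forall j, 0 <= w j) -> upward_closed H -> forall eps, 0 < eps ->
  exists M, (1 <= M)%nat /\ forall m m' t, (M <= m)%nat -> (M <= m')%nat ->
    Rabs (grid_mass H w t m N - grid_mass H w t m' N) <= eps.
Proof. induction N as [|N IH]; intros w H Hw HH eps Heps.
  - exists 1%nat; split; [lia|]. intros m m' t _ _. unfold grid_mass, sumR. simpl.
    rewrite Rminus_diag, Rabs_R0; lra.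
  - destruct (IH (fun j => w (S j)) H (fun j => Hw (S j)) HH (eps / 3)) as [M0 [HM0 HIH]]; [lra|].
    destruct (archimed_cor1 (eps / 6)) as [M1 [HM1 HM1']]; [lra|].
    exists (Nat.max M0 M1); split; [lia|]. intros m m' t Hm Hm'.
    set (f := fun x => grid_mass H (fun j => w (S j)) (t + w O * x) M0 N).
    assert (Hf : monotone01 f).
    { intros x y Hx Hxy Hy. apply grid_mass_mono; auto.
      apply Rplus_le_compat_l, Rmult_le_compat_l; auto. }
    assert (Hb : bounded01 f) by (intros x _; now apply grid_mass_bounds).
    assert (E : forall k, (M0 <= k)%nat -> Rabs (grid_mass H w t k (S N) - riemann_sum k (/ 2) f) <= eps / 3).
    { intros k Hk. rewrite grid_mass_S by lia. apply avg_close; [lia|]. intros a _. apply HIH; lia. }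
    assert (E1 := E m ltac:(lia)). assert (E2 := E m' ltac:(lia)). rewrite Rabs_minus_sym in E2.
    assert (E3 := riemann_mid_cauchy f m m' Hf Hb ltac:(lia) ltac:(lia)).
    assert (I1 : / INR m <= / INR M1) by (apply Rinv_le_contravar; [apply lt_0_INR | apply le_INR]; lia).
    assert (I2 : / INR m' <= / INR M1) by (apply Rinv_le_contravar; [apply lt_0_INR | apply le_INR]; lia).
    apply Rabs_le_bounds in E1, E2, E3. apply Rabs_le; lra.
Qed.

Lemma sumR_midpoint m : (1 <= m)%nat -> sumR (seq 0 m) (midpoint m) = INR m / 2.
Proof. intros Hm. assert (0 < INR m) by (apply lt_0_INR; lia). unfold midpoint. rewrite sumR_div.
  assert (S : forall k, sumR (seq 0 k) (fun a => INR a + / 2) = INR k * INR k / 2).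
  { induction k as [|k IH]; [unfold sumR; simpl; field|]. rewrite sumR_seq_S, IH, S_INR. field. }
  rewrite S. field. lra. Qed.

Lemma sumR_midpoint_sq m : (1 <= m)%nat ->
  sumR (seq 0 m) (fun a => midpoint m a ^ 2) = INR m / 3 - / (12 * INR m).
Proof. intros Hm. assert (0 < INR m) by (apply lt_0_INR; lia).
  rewrite (sumR_ext _ _ (fun a => (INR a + / 2) ^ 2 / INR m ^ 2)) by (intros; unfold midpoint; field; lra).
  rewrite sumR_div.
  assert (S : forall k, sumR (seq 0 k) (fun a => (INR a + / 2) ^ 2) = (4 * INR k ^ 3 - INR k) / 12).
  { induction k as [|k IH]; [unfold sumR; simpl; field|]. rewrite sumR_seq_S, IH, S_INR. field. }
  rewrite S. field. lra. Qed.

(* Bias-variance decomposition: each midpoint coordinate has mean 1/2 and variance 1/12 - 1/(12 m^2). *)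
Lemma sumR_tuples_sq_dev N : forall w c m, (1 <= m)%nat ->
  sumR (tuples m N) (fun g => (grid_comb w m g - c) ^ 2) =
  INR m ^ N * ((sumR (seq 0 N) w / 2 - c) ^ 2
               + sumR (seq 0 N) (fun j => w j ^ 2) * (/ 12 - / (12 * INR m ^ 2))).
Proof. induction N as [|N IH]; intros w c m Hm.
  - unfold sumR; simpl. rewrite Rmult_0_l. field.
  - assert (0 < INR m) by (apply lt_0_INR; lia). rewrite sumR_tuples_S.
    set (s := sumR (seq 0 N) (fun j => w (S j))). set (s2 := sumR (seq 0 N) (fun j => w (S j) ^ 2)).
    rewrite (sumR_ext _ _ (fun a => sumR (tuples m N)
        (fun g => (grid_comb (fun j => w (S j)) m g - (c - w O * midpoint m a)) ^ 2)))
      by (intros; apply sumR_ext; intros; simpl grid_comb; ring).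
    rewrite (sumR_ext _ _ (fun a => INR m ^ N * ((s / 2 - c) ^ 2 + s2 * (/ 12 - / (12 * INR m ^ 2)))
        + (INR m ^ N * 2 * (s / 2 - c) * w O) * midpoint m a + (INR m ^ N * w O ^ 2) * midpoint m a ^ 2))
      by (intros; rewrite IH by auto; fold s s2; ring).
    rewrite !sumR_plus, !sumR_scal, sumR_const, length_seq, sumR_midpoint, sumR_midpoint_sq by auto.
    rewrite !sumR_seq_shift. fold s s2. simpl pow. field. lra.
Qed.

Lemma rel_dev_gt_iff y K eps : 0 < K -> 0 < eps ->
  (eps < Rabs (y / K - 1) <-> K * (1 + eps) < y \/ y < K * (1 - eps)).
Proof. intros HK He. replace y with (K * (y / K)) at 2 3 by (field; lra). set (z := y / K).
  split.
  - intros Hz. destruct (Rcase_abs (z - 1)).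
    + rewrite Rabs_left in Hz by lra. right. apply Rmult_lt_compat_l; lra.
    + rewrite Rabs_right in Hz by lra. left. apply Rmult_lt_compat_l; lra.
  - intros [Hz|Hz]; apply Rmult_lt_reg_l in Hz; auto.
    + rewrite Rabs_right; lra.
    + rewrite Rabs_left; lra.
Qed.

Section RelativeDeviation.

Variables (N : nat) (w : nat -> R) (L : (nat -> R) -> R) (E : (nat -> R) -> bool) (K eps : R).
Hypothesis w_nonneg : forall j, 0 <= w j.
Hypothesis K_pos : 0 < K.
Hypothesis eps_pos : 0 < eps.
Hypothesis L_grid : forall m g, length g = N -> L (grid_point m g) = grid_comb w m g.
Hypothesis E_def : forall x, E x = if Rlt_dec eps (Rabs (L x / K - 1)) then true else false.

Let above (y : R) : bool := if Rlt_dec (K * (1 + eps)) y then true else false.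
Let not_below (y : R) : bool := if Rle_dec (K * (1 - eps)) y then true else false.

Lemma grid_frac_rel_dev m : (1 <= m)%nat ->
  grid_frac N E m = grid_mass above w 0 m N + 1 - grid_mass not_below w 0 m N.
Proof. intros Hm. assert (0 < INR m ^ N) by (apply pow_lt, lt_0_INR; lia).
  unfold grid_frac, grid_mass. rewrite length_filter_sumR.
  rewrite (sumR_ext _ _ (fun g => (if above (0 + grid_comb w m g) then 1 else 0) + 1
                                  - (if not_below (0 + grid_comb w m g) then 1 else 0))).
  { rewrite sumR_minus, sumR_plus, sumR_tuples_one. field. lra. }
  intros g Hg. rewrite E_def, L_grid, Rplus_0_l by (eapply in_tuples_length; eauto).
  assert (Hiff := rel_dev_gt_iff (grid_comb w m g) K eps K_pos eps_pos).
  assert (Hlt : K * (1 - eps) < K * (1 + eps)) by nra. unfold above, not_below.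
  destruct (Rlt_dec eps _) as [Hdev|Hdev]; [apply Hiff in Hdev|];
    destruct (Rlt_dec _ (grid_comb w m g)), (Rle_dec _ (grid_comb w m g));
    try lra; exfalso; apply Hdev, Hiff; lra.
Qed.

Lemma grid_frac_rel_dev_cauchy : Cauchy_crit (fun m => grid_frac N E (S m)).
Proof.
  assert (U1 : upward_closed above).
  { intros y z Hyz; unfold above. destruct (Rlt_dec _ y), (Rlt_dec _ z); auto; lra. }
  assert (U3 : upward_closed not_below).
  { intros y z Hyz; unfold not_below. destruct (Rle_dec _ y), (Rle_dec _ z); auto; lra. }
  intros e He. destruct (grid_mass_cauchy N w above w_nonneg U1 (e / 3)) as [M1 [_ HM1]]; [lra|].
  destruct (grid_mass_cauchy N w not_below w_nonneg U3 (e / 3)) as [M3 [_ HM3]]; [lra|].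
  exists (Nat.max M1 M3). intros a b Ha Hb. unfold R_dist. rewrite !grid_frac_rel_dev by lia.
  assert (X1 := HM1 (S a) (S b) 0 ltac:(lia) ltac:(lia)).
  assert (X3 := HM3 (S a) (S b) 0 ltac:(lia) ltac:(lia)).
  apply Rabs_le_bounds in X1, X3. apply Rabs_def1; lra.
Qed.

Let chebyshev_bound : R :=
  ((sumR (seq 0 N) w / 2 - K) ^ 2 + sumR (seq 0 N) (fun j => w j ^ 2) / 12) / (eps * K) ^ 2.

Lemma grid_frac_rel_dev_chebyshev m : (1 <= m)%nat -> grid_frac N E m <= chebyshev_bound.
Proof. intros Hm. assert (HmN : 0 < INR m ^ N) by (apply pow_lt, lt_0_INR; lia).
  assert (HeK : 0 < (eps * K) ^ 2) by (apply pow_lt, Rmult_lt_0_compat; lra).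
  assert (Hv : / 12 - / (12 * INR m ^ 2) <= / 12).
  { assert (0 < INR m ^ 2) by (apply pow_lt, lt_0_INR; lia).
    assert (0 < / (12 * INR m ^ 2)) by (apply Rinv_0_lt_compat; lra). lra. }
  assert (HV : 0 <= sumR (seq 0 N) (fun j => w j ^ 2)) by (apply sumR_nonneg; intros; apply pow2_ge_0).
  assert (Ch := markov_count (fun g => E (grid_point m g)) (tuples m N)
                  (fun g => (grid_comb w m g - K) ^ 2) ((eps * K) ^ 2)).
  rewrite sumR_tuples_sq_dev in Ch by auto.
  set (cnt := sumR (tuples m N) (fun g => if E (grid_point m g) then 1 else 0)) in Ch.
  set (B := (sumR (seq 0 N) w / 2 - K) ^ 2 + sumR (seq 0 N) (fun j => w j ^ 2) / 12).
  assert (Hcnt : (eps * K) ^ 2 * cnt <= INR m ^ N * B).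
  { eapply Rle_trans; [apply Ch|].
    - intros g Hg HEg. rewrite E_def, L_grid in HEg by (eapply in_tuples_length; eauto).
      destruct (Rlt_dec _ _) as [A|A]; [|discriminate]. apply rel_dev_gt_iff in A; auto.
      assert (0 < eps * K) by nra. simpl. destruct A; nra.
    - intros; apply pow2_ge_0.
    - lra.
    - apply Rmult_le_compat_l; [lra|]. apply Rplus_le_compat_l, Rmult_le_compat_l; auto. }
  unfold grid_frac, chebyshev_bound. rewrite length_filter_sumR. fold cnt B.
  apply (Rmult_le_reg_l ((eps * K) ^ 2 * INR m ^ N)); [apply Rmult_lt_0_compat; lra|].
  replace ((eps * K) ^ 2 * INR m ^ N * (cnt / INR m ^ N)) with ((eps * K) ^ 2 * cnt) by (field; lra).
  replace ((eps * K) ^ 2 * INR m ^ N * (B / (eps * K) ^ 2)) with (INR m ^ N * B) by (field; lra).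
  exact Hcnt.
Qed.

Lemma prob_rel_dev_chebyshev : exists l, is_prob N E l /\ l <= chebyshev_bound.
Proof.
  destruct (R_complete _ grid_frac_rel_dev_cauchy) as [l Hl]. exists l. split; [exact Hl|].
  eapply Rle_cv_lim; [| exact Hl | intros e He; exists O; intros; rewrite R_dist_eq; auto].
  intros k. apply grid_frac_rel_dev_chebyshev. lia.
Qed.

End RelativeDeviation.

Definition esym (k : nat) (l : list nat) (u : nat -> R) : R := sumR (choose k l) (fun I => prodR I u).

Lemma choose_0 (l : list nat) : choose 0 l = [[]].
Proof. now destruct l. Qed.

Lemma esym_0 l u : esym 0 l u = 1.
Proof. unfold esym. rewrite choose_0, sumR_cons, sumR_nil, prodR_nil; ring. Qed.

Lemma esym_S_nil k u : esym (S k) [] u = 0.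
Proof. reflexivity. Qed.

Lemma esym_S_cons k x l u : esym (S k) (x :: l) u = u x * esym k l u + esym (S k) l u.
Proof. unfold esym. simpl choose. rewrite sumR_app, sumR_map, <- sumR_scal. reflexivity. Qed.

Lemma pow_S_add_ge a b k : 0 <= a -> 0 <= b -> b ^ S k + INR (S k) * a * b ^ k <= (a + b) ^ S k.
Proof. intros Ha Hb. induction k as [|k IH]; [simpl; lra|].
  assert (0 <= b ^ k) by (apply pow_le; lra). assert (0 <= INR k) by apply pos_INR.
  change ((a + b) ^ S (S k)) with ((a + b) * (a + b) ^ S k).
  change (b ^ S (S k)) with (b * (b * b ^ k)). change (b ^ S k) with (b * b ^ k) in *.
  rewrite !S_INR in *. assert (X := Rmult_le_compat_l (a + b) _ _ ltac:(lra) IH).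
  assert (0 <= (INR k + 1) * (a * a) * b ^ k) by (apply Rmult_le_pos; [apply Rmult_le_pos|]; nra).
  nra. Qed.

Lemma pow_S_add_le a b k : 0 <= a -> 0 <= b -> (a + b) ^ S k <= b ^ S k + INR (S k) * a * (a + b) ^ k.
Proof. intros Ha Hb. induction k as [|k IH]; [simpl; lra|].
  assert (0 <= (a + b) ^ k) by (apply pow_le; lra).
  assert (b ^ S k <= (a + b) ^ S k) by (apply pow_incr; lra). assert (0 <= INR k) by apply pos_INR.
  change ((a + b) ^ S (S k)) with ((a + b) * (a + b) ^ S k). change (b ^ S (S k)) with (b * b ^ S k).
  rewrite !S_INR in *. assert (X := Rmult_le_compat_l (a + b) _ _ ltac:(lra) IH).
  assert (Y := Rmult_le_compat_l a _ _ Ha H0).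
  change ((a + b) ^ S k) with ((a + b) * (a + b) ^ k) in *. nra. Qed.

Lemma fact_esym_le_pow_sum l : forall k u, (forall x, In x l -> 0 <= u x) ->
  INR (fact k) * esym k l u <= sumR l u ^ k.
Proof. induction l as [|x l IH]; intros k u H; destruct k.
  1,3: rewrite esym_0; simpl; lra.
  - rewrite esym_S_nil, sumR_nil. simpl. lra.
  - rewrite esym_S_cons, sumR_cons. assert (Hx : 0 <= u x) by (apply H; now left).
    assert (H' : forall y, In y l -> 0 <= u y) by (intros; apply H; now right).
    assert (Hs : 0 <= sumR l u) by (now apply sumR_nonneg).
    assert (I1 := IH k u H'). assert (I2 := IH (S k) u H').
    assert (B := pow_S_add_ge (u x) (sumR l u) k Hx Hs).
    assert (0 <= INR (S k)) by apply pos_INR.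
    replace (INR (fact (S k)) * (u x * esym k l u + esym (S k) l u)) with
      (INR (S k) * u x * (INR (fact k) * esym k l u) + INR (fact (S k)) * esym (S k) l u)
      by (change (fact (S k)) with (S k * fact k)%nat; rewrite mult_INR; ring).
    apply Rle_trans with (INR (S k) * u x * sumR l u ^ k + sumR l u ^ S k); [|lra].
    apply Rplus_le_compat; auto. apply Rmult_le_compat_l; auto. now apply Rmult_le_pos.
Qed.

Lemma max0_pow_S_step u b M k : 0 <= u <= M ->
  Rmax 0 (u + b) ^ S k <= INR (S k) * u * Rmax 0 (b + M) ^ k + Rmax 0 b ^ S k.
Proof. intros Hu. assert (0 <= INR (S k)) by apply pos_INR.
  assert (P0 : 0 <= Rmax 0 (b + M) ^ k) by (apply pow_le, Rmax_l).
  destruct (Rle_dec 0 b) as [Hb|Hb].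
  - rewrite (Rmax_right 0 b), (Rmax_right 0 (u + b)), (Rmax_right 0 (b + M)) by lra.
    eapply Rle_trans; [apply pow_S_add_le; lra|].
    assert ((u + b) ^ k <= (b + M) ^ k) by (apply pow_incr; lra).
    assert (INR (S k) * u * (u + b) ^ k <= INR (S k) * u * (b + M) ^ k)
      by (apply Rmult_le_compat_l; [apply Rmult_le_pos|]; lra). lra.
  - rewrite (Rmax_left 0 b), pow_i, Rplus_0_r by (lra || lia).
    destruct (Rle_dec (u + b) 0) as [Hc|Hc].
    + rewrite (Rmax_left 0 (u + b)), pow_i by (lra || lia). apply Rmult_le_pos; [apply Rmult_le_pos|]; lra.
    + rewrite (Rmax_right 0 (u + b)) by lra.
      assert ((u + b) ^ k <= Rmax 0 (b + M) ^ k)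
        by (apply pow_incr; split; [lra | eapply Rle_trans; [|apply Rmax_r]; lra]).
      assert (0 <= (u + b) ^ k) by (apply pow_le; lra).
      assert (1 <= INR (S k)) by (rewrite S_INR; assert (0 <= INR k) by apply pos_INR; lra).
      change ((u + b) ^ S k) with ((u + b) * (u + b) ^ k).
      apply Rle_trans with (u * Rmax 0 (b + M) ^ k); [apply Rmult_le_compat; lra|].
      rewrite Rmult_assoc. rewrite <- (Rmult_1_l (u * _)) at 1.
      apply Rmult_le_compat_r; [apply Rmult_le_pos|]; lra.
Qed.

Lemma max0_sum_sub_pow_le_fact_esym l : forall k u M, 0 <= M -> (forall x, In x l -> 0 <= u x <= M) ->
  Rmax 0 (sumR l u - INR k * M) ^ k <= INR (fact k) * esym k l u.
Proof. induction l as [|x l IH]; intros k u M HM H; destruct k.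
  1,3: rewrite esym_0; simpl; lra.
  - rewrite esym_S_nil, sumR_nil, Rmax_left; [simpl; lra|].
    assert (0 <= INR (S k) * M) by (apply Rmult_le_pos; auto; apply pos_INR). lra.
  - rewrite esym_S_cons, sumR_cons. assert (Hx : 0 <= u x <= M) by (apply H; now left).
    assert (H' : forall y, In y l -> 0 <= u y <= M) by (intros; apply H; now right).
    assert (I1 := IH k u M HM H'). assert (I2 := IH (S k) u M HM H').
    set (b := sumR l u - INR (S k) * M) in *.
    replace (sumR l u - INR k * M) with (b + M) in I1 by (unfold b; rewrite S_INR; ring).
    replace (u x + sumR l u - INR (S k) * M) with (u x + b) by (unfold b; ring).
    assert (0 <= INR (S k)) by apply pos_INR.
    replace (INR (fact (S k)) * (u x * esym k l u + esym (S k) l u)) with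
      (INR (S k) * u x * (INR (fact k) * esym k l u) + INR (fact (S k)) * esym (S k) l u)
      by (change (fact (S k)) with (S k * fact k)%nat; rewrite mult_INR; ring).
    eapply Rle_trans; [apply max0_pow_S_step; exact Hx|].
    apply Rplus_le_compat; auto. apply Rmult_le_compat_l; auto. apply Rmult_le_pos; lra.
Qed.


Open Scope bool_scope.

Definition notin (I : list nat) (j : nat) : bool := negb (existsb (Nat.eqb j) I).

Lemma existsb_eqb_In j I : existsb (Nat.eqb j) I = true <-> In j I.
Proof. rewrite existsb_exists. split.
  - intros [x [Hx E]]. apply Nat.eqb_eq in E. now subst.
  - intros H. exists j. split; [exact H | apply Nat.eqb_refl]. Qed.

Lemma notin_false j I : notin I j = false <-> In j I.
Proof. unfold notin. rewrite <- existsb_eqb_In. now destruct (existsb _ _). Qed.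

Lemma notin_true j I : notin I j = true <-> ~ In j I.
Proof. rewrite <- notin_false. destruct (notin I j); split; congruence. Qed.

Lemma in_choose_S k x l I : In I (choose (S k) (x :: l)) ->
  (exists I', I = x :: I' /\ In I' (choose k l)) \/ In I (choose (S k) l).
Proof. simpl. intros H. apply in_app_or in H. destruct H as [H|H]; [left | now right].
  apply in_map_iff in H. destruct H as [I' [<- H]]. eauto. Qed.

Lemma choose_incl l : forall k I, In I (choose k l) -> forall x, In x I -> In x l.
Proof. induction l as [|y l IH]; intros k I HI x Hx.
  - destruct k; simpl in HI; [destruct HI as [<-|[]]; inversion Hx | inversion HI].
  - destruct k; [rewrite choose_0 in HI; destruct HI as [<-|[]]; inversion Hx|].
    apply in_choose_S in HI. destruct HI as [[I' [-> HI']]|HI].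
    + destruct Hx as [<-|Hx]; [now left | right; eapply IH; eauto].
    + right; eapply IH; eauto. Qed.

Lemma choose_length l : forall k I, In I (choose k l) -> length I = k.
Proof. induction l as [|y l IH]; intros k I HI.
  - destruct k; simpl in HI; [now destruct HI as [<-|[]] | inversion HI].
  - destruct k; [rewrite choose_0 in HI; now destruct HI as [<-|[]]|].
    apply in_choose_S in HI. destruct HI as [[I' [-> HI']]|HI]; [simpl; f_equal|]; eauto. Qed.

Lemma filter_notin_nil l : filter (notin []) l = l.
Proof. induction l as [|a l IH]; [reflexivity|]. simpl. now rewrite IH. Qed.

Lemma filter_notin_cons x l I : ~ In x l -> filter (notin (x :: I)) l = filter (notin I) l.
Proof. intros Hx. apply filter_ext_in. intros a Ha. unfold notin. simpl.
  destruct (Nat.eqb_spec a x); [subst; contradiction | reflexivity]. Qed.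

Lemma prodR_compl_mul l : NoDup l -> forall k I g, In I (choose k l) ->
  prodR (filter (notin I) l) g * prodR I g = prodR l g.
Proof. induction l as [|y l IH]; intros Hl k I g HI.
  - destruct k; simpl in HI; [destruct HI as [<-|[]]; unfold prodR; simpl; ring | inversion HI].
  - inversion Hl; subst. destruct k.
    + rewrite choose_0 in HI. destruct HI as [<-|[]]. now rewrite prodR_nil, Rmult_1_r, filter_notin_nil.
    + apply in_choose_S in HI. destruct HI as [[I' [-> HI']]|HI].
      * simpl filter. replace (notin (y :: I') y) with false by (symmetry; apply notin_false; now left).
        rewrite filter_notin_cons, !prodR_cons, <- (IH H2 k I' g HI') by auto. ring.
      * simpl filter. replace (notin I y) with true.
        -- rewrite !prodR_cons, <- (IH H2 (S k) I g HI). ring.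
        -- symmetry; apply notin_true. intros Hy. apply H1. eapply choose_incl; eauto.
Qed.

Lemma length_filter_compl_add l : NoDup l -> forall k I (P : nat -> bool), In I (choose k l) ->
  (length (filter (fun j => P j && notin I j) l) + length (filter P I) = length (filter P l))%nat.
Proof. induction l as [|y l IH]; intros Hl k I P HI.
  - destruct k; simpl in HI; [now destruct HI as [<-|[]] | inversion HI].
  - inversion Hl; subst. destruct k.
    + rewrite choose_0 in HI. destruct HI as [<-|[]]. simpl filter at 2. rewrite Nat.add_0_r.
      f_equal. apply filter_ext; intros a. unfold notin; simpl. now rewrite Bool.andb_true_r.
    + apply in_choose_S in HI. destruct HI as [[I' [-> HI']]|HI].
      * simpl filter. replace (notin (y :: I') y) with false by (symmetry; apply notin_false; now left).
        rewrite Bool.andb_false_r.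
        rewrite (filter_ext_in (fun j => P j && notin (y :: I') j) (fun j => P j && notin I' j)).
        2:{ intros a Ha. f_equal. unfold notin; simpl.
            destruct (Nat.eqb_spec a y); [subst; contradiction | reflexivity]. }
        specialize (IH H2 k I' P HI'). destruct (P y); simpl; lia.
      * simpl filter. replace (notin I y) with true.
        2:{ symmetry; apply notin_true. intros Hy. apply H1. eapply choose_incl; eauto. }
        rewrite Bool.andb_true_r. specialize (IH H2 (S k) I P HI). destruct (P y); simpl; lia.
Qed.

Lemma nth_filter_seq (P : nat -> bool) len : forall a p, (p < length (filter P (seq a len)))%nat ->
  let D := nth p (filter P (seq a len)) O in
  (a <= D < a + len)%nat /\ P D = true /\ length (filter P (seq a (D - a))) = p.
Proof. induction len as [|len IH]; intros a p Hp; simpl in *; [lia|].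
  destruct (P a) eqn:Pa.
  - destruct p as [|p].
    + simpl. rewrite Nat.sub_diag. simpl. repeat split; auto; lia.
    + simpl in Hp. simpl. destruct (IH (S a) p ltac:(lia)) as [H1 [H2 H3]].
      set (D := nth p (filter P (seq (S a) len)) O) in *.
      repeat split; auto; try lia. replace (D - a)%nat with (S (D - S a)) by lia. simpl. rewrite Pa.
      simpl. now rewrite H3.
  - destruct (IH (S a) p Hp) as [H1 [H2 H3]].
    set (D := nth p (filter P (seq (S a) len)) O) in *.
    repeat split; auto; try lia. replace (D - a)%nat with (S (D - S a)) by lia. simpl. now rewrite Pa.
Qed.

Lemma count_below_lt (P : nat -> bool) a D1 D2 : (a <= D1 < D2)%nat -> P D1 = true ->
  (length (filter P (seq a (D1 - a))) < length (filter P (seq a (D2 - a))))%nat.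
Proof. intros H HP. replace (D2 - a)%nat with ((D1 - a) + (D2 - D1))%nat by lia.
  rewrite seq_app, filter_app, length_app. replace (a + (D1 - a))%nat with D1 by lia.
  replace (D2 - D1)%nat with (S (D2 - D1 - 1)) by lia. simpl. rewrite HP. simpl. lia. Qed.

Lemma count_below_inj (P : nat -> bool) a D1 D2 : (a <= D1)%nat -> (a <= D2)%nat ->
  P D1 = true -> P D2 = true ->
  length (filter P (seq a (D1 - a))) = length (filter P (seq a (D2 - a))) -> D1 = D2.
Proof. intros H1 H2 P1 P2 E. destruct (Nat.lt_total D1 D2) as [L|[L|L]]; auto.
  - assert (X := count_below_lt P a D1 D2 ltac:(lia) P1). lia.
  - assert (X := count_below_lt P a D2 D1 ltac:(lia) P2). lia. Qed.

Lemma filter_ltb_seq (P : nat -> bool) r E : (1 <= E <= S r)%nat ->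
  filter (fun j => (j <? E)%nat && P j) (seq 1 r) = filter P (seq 1 (E - 1)).
Proof. intros HE. replace r with ((E - 1) + (S r - E))%nat at 1 by lia.
  rewrite seq_app, filter_app.
  rewrite (filter_ext_in _ P (seq 1 (E - 1))).
  2:{ intros j Hj. apply in_seq in Hj. replace (j <? E)%nat with true; auto.
      symmetry; apply Nat.ltb_lt; lia. }
  rewrite (filter_ext_in _ (fun _ => false) (seq (1 + (E - 1)) (S r - E))).
  2:{ intros j Hj. apply in_seq in Hj. replace (j <? E)%nat with false; auto.
      symmetry; apply Nat.ltb_ge; lia. }
  now rewrite filter_false, app_nil_r. Qed.

Lemma count_compl_below r k I E : In I (choose k (seq 1 r)) -> (1 <= E <= S r)%nat ->
  (length (filter (notin I) (seq 1 (E - 1))) + length (filter (fun i => i <? E)%nat I) = E - 1)%nat.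
Proof. intros HI HE.
  assert (X := length_filter_compl_add (seq 1 r) (seq_NoDup _ _) k I (fun i => i <? E)%nat HI).
  cbv beta in X. rewrite filter_ltb_seq in X by auto.
  assert (Y := filter_ltb_seq (fun _ => true) r E HE). rewrite filter_true in Y.
  rewrite (filter_ext (fun j => (j <? E)%nat && true) (fun j => (j <? E)%nat)) in Y
    by (intros; apply Bool.andb_true_r).
  now rewrite Y, length_seq in X. Qed.

Lemma length_compl r k I : In I (choose k (seq 1 r)) -> length (compl_r r I) = (r - k)%nat.
Proof. intros HI. assert (X := length_filter_compl_add (seq 1 r) (seq_NoDup _ _) k I (fun _ => true) HI).
  cbv beta in X. rewrite !filter_true, length_seq in X.
  change (fun j => true && notin I j) with (notin I) in X.
  rewrite (choose_length _ _ _ HI) in X. unfold compl_r. fold (notin I). lia. Qed.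

Definition dist (D i : nat) : R := Rabs (INR i - INR D).

Definition pure_support (D a : nat) (I : list nat) : bool :=
  notin I D && (length (filter (fun i => i <? D)%nat I) =? a)%nat.

Definition pure_coef (r n D : nat) : R := INR (fact (r - n)) / (INR (fact (D - 1)) * INR (fact (r - D))).

Lemma prodR_seq_skip_nth (d : list nat) p h : NoDup d -> (p < length d)%nat ->
  prodR (seq 0 (length d)) (fun l => if (l =? p)%nat then 1 else h (nth l d O)) =
  prodR d (fun j => if (j =? nth p d O)%nat then 1 else h j).
Proof. intros Hd Hp. rewrite (prodR_nth d). apply prodR_ext. intros l Hl. apply in_seq in Hl.
  destruct (Nat.eqb_spec l p), (Nat.eqb_spec (nth l d O) (nth p d O)); auto.
  - now subst.
  - exfalso. apply n. eapply NoDup_nth; eauto. lia. Qed.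

Lemma prodR_dist_below a k : prodR (seq a k) (fun j => INR (a + k) - INR j) = INR (fact k).
Proof. revert a; induction k as [|k IH]; intros a; [reflexivity|].
  simpl seq. rewrite prodR_cons. replace (a + S k)%nat with (S a + k)%nat by lia. rewrite IH.
  change (fact (S k)) with (S k * fact k)%nat. rewrite mult_INR. f_equal.
  rewrite plus_INR, !S_INR. ring. Qed.

Lemma prodR_dist_above D k : prodR (seq (S D) k) (fun j => INR j - INR D) = INR (fact k).
Proof. induction k as [|k IH]; [reflexivity|].
  rewrite seq_S, prodR_app, IH, prodR_cons, prodR_nil. change (fact (S k)) with (S k * fact k)%nat.
  rewrite mult_INR, plus_INR, !S_INR. ring. Qed.

Lemma sumR_dist_below a k : sumR (seq a k) (fun j => INR (a + k) - INR j) = INR k * (INR k + 1) / 2.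
Proof. revert a; induction k as [|k IH]; intros a; [unfold sumR; simpl; field|].
  simpl seq. rewrite sumR_cons. replace (a + S k)%nat with (S a + k)%nat by lia. rewrite IH.
  rewrite plus_INR, !S_INR. field. Qed.

Lemma sumR_dist_above D k : sumR (seq (S D) k) (fun j => INR j - INR D) = INR k * (INR k + 1) / 2.
Proof. induction k as [|k IH]; [unfold sumR; simpl; field|].
  rewrite seq_S, sumR_app, IH, sumR_cons, sumR_nil, plus_INR, !S_INR. field. Qed.

Lemma seq_split_at r D : (1 <= D <= r)%nat -> seq 1 r = seq 1 (D - 1) ++ D :: seq (S D) (r - D).
Proof. intros H. replace r with ((D - 1) + S (r - D))%nat at 1 by lia. rewrite seq_app.
  now replace (1 + (D - 1))%nat with D by lia. Qed.

Lemma prodR_inv_dist r D : (1 <= D <= r)%nat ->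
  prodR (seq 1 r) (fun j => if (j =? D)%nat then 1 else / dist D j)
  = / (INR (fact (D - 1)) * INR (fact (r - D))).
Proof. intros HD. rewrite (seq_split_at r D HD), prodR_app, prodR_cons, Nat.eqb_refl, Rmult_1_l.
  rewrite (prodR_ext (seq 1 (D - 1)) _ (fun j => / (INR (1 + (D - 1)) - INR j))).
  2:{ intros j Hj. apply in_seq in Hj. replace (j =? D)%nat with false by (symmetry; apply Nat.eqb_neq; lia).
      unfold dist. rewrite Rabs_minus_sym, Rabs_right; [do 3 f_equal; lia|].
      assert (INR j < INR D) by (apply lt_INR; lia). lra. }
  rewrite (prodR_ext (seq (S D) (r - D)) _ (fun j => / (INR j - INR D))).
  2:{ intros j Hj. apply in_seq in Hj. replace (j =? D)%nat with false by (symmetry; apply Nat.eqb_neq; lia).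
      unfold dist. rewrite Rabs_right; auto. assert (INR D < INR j) by (apply lt_INR; lia). lra. }
  now rewrite !prodR_inv, prodR_dist_below, prodR_dist_above, Rinv_mult. Qed.

Lemma prodR_compl_inv_dist r k I D : In I (choose k (seq 1 r)) -> (1 <= D <= r)%nat -> ~ In D I ->
  prodR (compl_r r I) (fun j => if (j =? D)%nat then 1 else / dist D j)
  = / (INR (fact (D - 1)) * INR (fact (r - D))) * prodR I (dist D).
Proof. intros HI HD HDI.
  assert (X := prodR_compl_mul (seq 1 r) (seq_NoDup _ _) k I
                 (fun j => if (j =? D)%nat then 1 else / dist D j) HI).
  rewrite (prodR_ext I _ (fun j => / dist D j)), prodR_inv, prodR_inv_dist in X by
    (auto || (intros j Hj; destruct (Nat.eqb_spec j D); [subst; contradiction | reflexivity])).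
  assert (Hpos : 0 < prodR I (dist D)).
  { apply prodR_pos. intros j Hj. unfold dist. apply Rabs_pos_lt. intros Z. apply HDI.
    replace D with j by (apply INR_eq; lra). exact Hj. }
  rewrite <- X. unfold compl_r. fold (notin I). field. lra. Qed.

(* Column p of pi(r, I) is supported in row d_p - p, so its (p, q) entry is nonzero exactly when
   d_p = p + q, i.e. when p + q is not in I and q - 1 elements of I lie below it. *)
Lemma pure_support_iff r n p q I : (1 <= q <= n)%nat -> (n <= r)%nat -> (p <= r - n)%nat ->
  In I (choose (n - 1) (seq 1 r)) ->
  pure_support (p + q) (q - 1) I = (q =? nth p (compl_r r I) O - p)%nat.
Proof. intros Hq Hr Hp HI.
  assert (Hpd : (p < length (filter (notin I) (seq 1 r)))%nat)
    by (change (filter (notin I) (seq 1 r)) with (compl_r r I); rewrite (length_compl r (n - 1) I HI); lia).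
  destruct (nth_filter_seq (notin I) r 1 p Hpd) as [H1 [H2 H3]].
  change (filter (notin I) (seq 1 r)) with (compl_r r I) in H1, H2, H3.
  set (D0 := nth p (compl_r r I) O) in *.
  assert (X0 := count_compl_below r (n - 1) I D0 HI ltac:(lia)). rewrite H3 in X0.
  unfold pure_support. destruct (Nat.eqb_spec q (D0 - p)) as [E|E].
  - replace (p + q)%nat with D0 by lia. rewrite H2. simpl. apply Nat.eqb_eq. lia.
  - destruct (notin I (p + q)) eqn:Hn; [|reflexivity]. simpl. apply Nat.eqb_neq. intros C.
    assert (X := count_compl_below r (n - 1) I (p + q) HI ltac:(lia)).
    apply E. enough (D0 = p + q)%nat by lia.
    apply (count_below_inj (notin I) 1); auto; lia.
Qed.

Lemma pure_entry_char r n p q I : (1 <= q <= n)%nat -> (n <= r)%nat -> (p <= r - n)%nat ->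
  In I (choose (n - 1) (seq 1 r)) ->
  pure_entry r n p q I =
  if pure_support (p + q) (q - 1) I then pure_coef r n (p + q) * prodR I (dist (p + q)) else 0.
Proof. intros Hq Hr Hp HI. rewrite (pure_support_iff r n p q I) by auto. unfold pure_entry. cbv zeta.
  set (d := compl_r r I). destruct (Nat.eqb_spec q (nth p d O - p)) as [E|E]; [|reflexivity].
  assert (Hlen : length d = (r - n + 1)%nat) by (unfold d; rewrite (length_compl r (n - 1) I HI); lia).
  assert (Hnd : NoDup d) by (apply NoDup_filter, seq_NoDup).
  assert (Hin : In (nth p d O) d) by (apply nth_In; lia).
  assert (HD : nth p d O = (p + q)%nat).
  { destruct (nth_filter_seq (notin I) r 1 p ltac:(change (filter (notin I) (seq 1 r)) with d; lia))
      as [_ [_ H3]].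
    change (filter (notin I) (seq 1 r)) with d in H3.
    assert (Hle := filter_length_le (notin I) (seq 1 (nth p d O - 1))). rewrite H3, length_seq in Hle. lia. }
  rewrite <- Hlen.
  change (fold_right Rmult 1 _) with
    (prodR (seq 0 (length d)) (fun l => if (l =? p)%nat then 1 else / dist (nth p d O) (nth l d O))).
  rewrite (prodR_seq_skip_nth d p (fun j => / dist (nth p d O) j)), HD by (auto; lia).
  unfold d. rewrite prodR_compl_inv_dist with (k := (n - 1)%nat) by (auto; try lia;
    apply notin_true; unfold d, compl_r in Hin; rewrite <- HD; now apply filter_In in Hin).
  unfold pure_coef. fold (dist (p + q)). unfold Rdiv. ring.
Qed.

Lemma sumR_choose_pure_support D u l2 : (forall x, In x l2 -> (D < x)%nat) ->
  forall l1, (forall x, In x l1 -> (x < D)%nat) -> forall k a,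
  sumR (choose k (l1 ++ D :: l2)) (fun I => if pure_support D a I then prodR I u else 0) =
  if (a <=? k)%nat then esym a l1 u * esym (k - a) l2 u else 0.
Proof. intros H2. induction l1 as [|x l1 IH]; intros H1 k a.
  - destruct k as [|k].
    + rewrite choose_0, sumR_cons, sumR_nil. unfold pure_support. destruct a; simpl; [|ring].
      rewrite !esym_0, prodR_nil; ring.
    + simpl app. simpl choose. rewrite sumR_app, sumR_map.
      rewrite (sumR_ext _ _ (fun _ => 0))
        by (intros I _; unfold pure_support, notin; simpl; now rewrite Nat.eqb_refl).
      rewrite sumR_const, Rmult_0_r, Rplus_0_l.
      rewrite (sumR_ext _ _ (fun I => if (0 =? a)%nat then prodR I u else 0)).
      2:{ intros I HI. assert (Hgt : forall y, In y I -> (D < y)%nat)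
            by (intros y Hy; apply H2; eapply choose_incl; eauto).
          unfold pure_support. replace (notin I D) with true.
          - rewrite (filter_ext_in _ (fun _ => false) I), filter_false; [reflexivity|].
            intros y Hy. apply Nat.ltb_ge. specialize (Hgt y Hy). lia.
          - symmetry. apply notin_true. intros Hy. specialize (Hgt D Hy). lia. }
      destruct a as [|a]; simpl.
      * now rewrite esym_0, Rmult_1_l.
      * rewrite sumR_const, Rmult_0_r. destruct (a <=? k)%nat; [rewrite esym_S_nil|]; ring.
  - assert (Hx : (x < D)%nat) by (apply H1; now left).
    assert (H1' : forall y, In y l1 -> (y < D)%nat) by (intros; apply H1; now right).
    destruct k as [|k].
    + rewrite choose_0, sumR_cons, sumR_nil. unfold pure_support. destruct a; simpl; [|ring].
      rewrite !esym_0, prodR_nil; ring.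
    + simpl app. simpl choose. rewrite sumR_app, sumR_map, (IH H1' (S k) a).
      assert (Ex : forall I, pure_support D a (x :: I) =
        notin I D && (S (length (filter (fun i => (i <? D)%nat) I)) =? a)%nat).
      { intros I. unfold pure_support, notin. simpl.
        replace (D =? x)%nat with false by (symmetry; apply Nat.eqb_neq; lia).
        now replace (x <? D)%nat with true by (symmetry; apply Nat.ltb_lt; lia). }
      destruct a as [|a].
      * rewrite (sumR_ext _ _ (fun _ => 0)) by (intros I _; now rewrite Ex, Bool.andb_false_r).
        rewrite sumR_const. simpl. rewrite !esym_0. ring.
      * rewrite (sumR_ext _ _ (fun I => u x * (if pure_support D a I then prodR I u else 0))).
        2:{ intros I _. rewrite Ex. unfold pure_support. simpl (S _ =? S a)%nat.
            destruct (_ && _); rewrite ?prodR_cons; ring. }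
        rewrite sumR_scal, IH, esym_S_cons by auto. simpl. destruct (a <=? k)%nat; ring.
Qed.

Lemma sumR_pure_entry r n p q : (1 <= q <= n)%nat -> (n <= r)%nat -> (p <= r - n)%nat ->
  sumR (choose (n - 1) (seq 1 r)) (pure_entry r n p q) =
  pure_coef r n (p + q) * esym (q - 1) (seq 1 (p + q - 1)) (dist (p + q))
                        * esym (n - q) (seq (S (p + q)) (r - (p + q))) (dist (p + q)).
Proof. intros Hq Hr Hp.
  rewrite (sumR_ext _ _ (fun I => pure_coef r n (p + q) *
                          (if pure_support (p + q) (q - 1) I then prodR I (dist (p + q)) else 0)))
    by (intros I HI; rewrite pure_entry_char by auto; destruct (pure_support _ _ _); ring).
  rewrite sumR_scal, (seq_split_at r (p + q)) at 1 by lia.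
  rewrite sumR_choose_pure_support by (intros x Hx; apply in_seq in Hx; lia).
  replace (q - 1 <=? n - 1)%nat with true by (symmetry; apply Nat.leb_le; lia).
  replace (n - 1 - (q - 1))%nat with (n - q)%nat by lia. ring.
Qed.

Lemma pure_coef_nonneg r n D : 0 <= pure_coef r n D.
Proof. unfold pure_coef. apply Rmult_le_pos; [apply pos_INR|].
  apply Rlt_le, Rinv_0_lt_compat, Rmult_lt_0_compat; apply lt_0_INR, lt_O_fact. Qed.

Lemma pure_entry_nonneg r n p q I : 0 <= pure_entry r n p q I.
Proof. unfold pure_entry. destruct (Nat.eqb _ _); [|lra]. apply Rmult_le_pos; [apply pos_INR|].
  change (0 <= prodR (seq 0 (r - n + 1)) (fun l => if (l =? p)%nat then 1
      else / Rabs (INR (nth l (compl_r r I) O) - INR (nth p (compl_r r I) O)))).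
  apply prodR_nonneg. intros l _. destruct (_ =? _)%nat; [lra | apply Rinv_nonneg, Rabs_pos].
Qed.

Lemma pure_entry_le r n p q I : (1 <= q <= n)%nat -> (n <= r)%nat -> (p <= r - n)%nat ->
  In I (choose (n - 1) (seq 1 r)) -> pure_entry r n p q I <= pure_coef r n (p + q) * INR r ^ (n - 1).
Proof. intros Hq Hr Hp HI. rewrite pure_entry_char by auto.
  assert (HF := pure_coef_nonneg r n (p + q)). assert (0 <= INR r ^ (n - 1)) by (apply pow_le, pos_INR).
  destruct (pure_support _ _ _); [|apply Rmult_le_pos; auto].
  apply Rmult_le_compat_l; auto. rewrite <- (choose_length _ _ _ HI). apply prodR_le_pow.
  intros i Hi. apply (choose_incl _ _ _ HI), in_seq in Hi. unfold dist. split; [apply Rabs_pos|].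
  assert (1 <= INR i <= INR r) by (split; [apply (le_INR 1) | apply le_INR]; lia).
  assert (1 <= INR (p + q) <= INR r) by (split; [apply (le_INR 1) | apply le_INR]; lia).
  apply Rabs_le; lra.
Qed.

Lemma pow_div_distr a b k : b <> 0 -> (a / b) ^ k = a ^ k / b ^ k.
Proof. intros Hb. unfold Rdiv. now rewrite Rpow_mult_distr, pow_inv. Qed.

Lemma bernoulli_sub y m : 0 <= y <= 1 -> 1 - INR m * y <= (1 - y) ^ m.
Proof. intros Hy. induction m as [|m IH]; [simpl; lra|].
  rewrite S_INR. simpl pow. assert (0 <= INR m) by apply pos_INR.
  assert (X := Rmult_le_compat_l (1 - y) _ _ ltac:(lra) IH). nra. Qed.

(* From (1 + y)^m (1 - y)^m <= 1 and Bernoulli's inequality for (1 - y)^m. *)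
Lemma pow_one_add_le y m : 0 <= y -> INR m * y <= / 2 -> (1 + y) ^ m <= 1 + 2 * INR m * y.
Proof. intros Hy Hm. destruct m as [|m]; [simpl; lra|].
  assert (H1 : 1 <= INR (S m)) by (rewrite S_INR; assert (0 <= INR m) by apply pos_INR; lra).
  assert (Hy1 : y <= / 2) by nra. set (t := INR (S m) * y) in *.
  assert (A := bernoulli_sub y (S m) ltac:(lra)). fold t in A.
  assert (B : (1 + y) ^ S m * (1 - y) ^ S m <= 1).
  { rewrite <- Rpow_mult_distr.
    apply Rle_trans with (1 ^ S m); [apply pow_incr; split; nra | now rewrite pow1]. }
  assert (P : 0 <= (1 + y) ^ S m) by (apply pow_le; lra).
  assert (C : (1 + y) ^ S m * (1 - t) <= 1) by (eapply Rle_trans; [apply Rmult_le_compat_l|]; eauto).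
  assert (0 <= t) by (unfold t; nra). replace (2 * INR (S m) * y) with (2 * t) by (unfold t; ring).
  clearbody t. nra. Qed.

Lemma fact_add_bounds x k :
  INR (fact x) * INR x ^ k <= INR (fact (x + k)) <= INR (fact x) * INR (x + k) ^ k.
Proof. induction k as [|k [IH1 IH2]]; [rewrite Nat.add_0_r; simpl; lra|].
  replace (x + S k)%nat with (S (x + k)) by lia.
  change (fact (S (x + k))) with (S (x + k) * fact (x + k))%nat. rewrite mult_INR.
  change (INR x ^ S k) with (INR x * INR x ^ k).
  change (INR (S (x + k)) ^ S k) with (INR (S (x + k)) * INR (S (x + k)) ^ k).
  assert (0 <= INR (fact x)) by apply pos_INR. assert (0 <= INR x ^ k) by (apply pow_le, pos_INR).
  assert (INR x <= INR (S (x + k))) by (apply le_INR; lia). assert (0 <= INR x) by apply pos_INR.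
  assert (INR (x + k) ^ k <= INR (S (x + k)) ^ k)
    by (apply pow_incr; split; [apply pos_INR | apply le_INR; lia]).
  assert (0 <= INR (S (x + k))) by apply pos_INR.
  split.
  - apply Rle_trans with (INR (S (x + k)) * (INR (fact x) * INR x ^ k)); [|apply Rmult_le_compat_l; auto].
    replace (INR (fact x) * (INR x * INR x ^ k)) with (INR x * (INR (fact x) * INR x ^ k)) by ring.
    apply Rmult_le_compat_r; [apply Rmult_le_pos|]; auto.
  - apply Rle_trans with (INR (S (x + k)) * (INR (fact x) * INR (x + k) ^ k));
      [apply Rmult_le_compat_l; auto|].
    replace (INR (fact x) * (INR (S (x + k)) * INR (S (x + k)) ^ k)) with
      (INR (S (x + k)) * (INR (fact x) * INR (S (x + k)) ^ k)) by ring.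
    apply Rmult_le_compat_l; auto. apply Rmult_le_compat_l; auto.
Qed.

(* For the distances 1, ..., x + k, whose sum is about x^2/2, one expects k! e_k ~ (x^2/2)^k and
   (x + k)!/x! ~ x^k; [esym_ratio] is the quotient of the two sides, which tends to 1. *)
Definition esym_ratio (x k : nat) (e : R) : R :=
  INR (fact x) * 2 ^ k * (INR (fact k) * e) / (INR (fact (x + k)) * INR x ^ k).

Section EsymRatio.

Variables (x k : nat) (l : list nat) (u : nat -> R) (d : R).
Hypothesis k_le_x : (k <= x)%nat.
Hypothesis d_range : 0 < d <= 1.
Hypothesis x_large : 8 * (INR k + 1) ^ 2 <= INR x * d.
Hypothesis u_range : forall j, In j l -> 0 <= u j <= INR (x + k).
Hypothesis u_sum : sumR l u = INR (x + k) * (INR (x + k) + 1) / 2.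

Let P := INR (fact x).
Let F := INR (fact (x + k)).

Lemma esym_ratio_ge : 1 - d <= esym_ratio x k (esym k l u).
Proof.
  assert (Hk0 : 0 <= INR k) by apply pos_INR. assert (Hkx : INR k <= INR x) by (apply le_INR; auto).
  assert (X1 : 1 <= INR x) by nra. assert (HN : INR (x + k) = INR x + INR k) by apply plus_INR.
  destruct (fact_add_bounds x k) as [_ F2]. fold P F in F2.
  assert (HP : 0 < P) by (apply lt_0_INR, lt_O_fact). assert (HF : 0 < F) by (apply lt_0_INR, lt_O_fact).
  assert (HXk : 0 < INR x ^ k) by (apply pow_lt; lra). assert (H2k : 0 < 2 ^ k) by (apply pow_lt; lra).
  assert (He := max0_sum_sub_pow_le_fact_esym l k u (INR (x + k)) (pos_INR _) u_range).
  rewrite u_sum, Rmax_right in He by (rewrite HN; nra).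
  replace (INR (x + k) * (INR (x + k) + 1) / 2 - INR k * INR (x + k))
    with (INR (x + k) * (INR x + 1 - INR k) / 2) in He by (rewrite HN; field).
  set (N := INR (x + k)) in *. set (e := INR (fact k) * esym k l u) in *.
  assert (HNp : 0 < N) by lra.
  assert (L1 : P * N ^ k * (INR x + 1 - INR k) ^ k <= e * (P * 2 ^ k)).
  { replace (P * N ^ k * (INR x + 1 - INR k) ^ k) with ((N * (INR x + 1 - INR k) / 2) ^ k * (P * 2 ^ k))
      by (rewrite pow_div_distr, Rpow_mult_distr by lra; field; lra).
    apply Rmult_le_compat_r; [nra | auto]. }
  assert (L2 : ((INR x + 1 - INR k) / INR x) ^ k <= esym_ratio x k (esym k l u)).
  { unfold esym_ratio. fold P F e. rewrite pow_div_distr by lra.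
    apply (Rmult_le_reg_r (F * INR x ^ k)); [nra|].
    replace ((INR x + 1 - INR k) ^ k / INR x ^ k * (F * INR x ^ k)) with (F * (INR x + 1 - INR k) ^ k)
      by (field; lra).
    replace (P * 2 ^ k * e / (F * INR x ^ k) * (F * INR x ^ k)) with (e * (P * 2 ^ k)) by (field; lra).
    eapply Rle_trans; [|exact L1].
    apply Rmult_le_compat_r; [apply pow_le; lra | exact F2]. }
  assert (Q : 0 <= INR k / INR x <= 1).
  { split; [apply Rmult_le_pos; [lra | apply Rlt_le, Rinv_0_lt_compat; lra]|].
    apply (Rmult_le_reg_r (INR x)); [lra|]. unfold Rdiv. rewrite Rmult_assoc, Rinv_l by lra. lra. }
  assert (L3 : (1 - INR k / INR x) ^ k <= ((INR x + 1 - INR k) / INR x) ^ k).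
  { apply pow_incr. split; [lra|].
    replace ((INR x + 1 - INR k) / INR x) with (1 - INR k / INR x + / INR x) by (field; lra).
    assert (0 < / INR x) by (apply Rinv_0_lt_compat; lra). lra. }
  assert (L4 := bernoulli_sub (INR k / INR x) k Q).
  assert (L5 : INR k * (INR k / INR x) <= d).
  { apply (Rmult_le_reg_r (INR x)); [lra|].
    replace (INR k * (INR k / INR x) * INR x) with (INR k * INR k) by (field; lra). nra. }
  lra.
Qed.

Lemma esym_ratio_le : esym_ratio x k (esym k l u) <= 1 + d.
Proof.
  assert (Hk0 : 0 <= INR k) by apply pos_INR. assert (X1 : 1 <= INR x) by nra.
  assert (HN : INR (x + k) = INR x + INR k) by apply plus_INR.
  destruct (fact_add_bounds x k) as [F1 _]. fold P F in F1.
  assert (HP : 0 < P) by (apply lt_0_INR, lt_O_fact). assert (HF : 0 < F) by (apply lt_0_INR, lt_O_fact).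
  assert (HXk : 0 < INR x ^ k) by (apply pow_lt; lra). assert (H2k : 0 < 2 ^ k) by (apply pow_lt; lra).
  assert (He := fact_esym_le_pow_sum l k u ltac:(intros j Hj; apply u_range; auto)).
  assert (He0 : 0 <= INR (fact k) * esym k l u).
  { eapply Rle_trans; [apply pow_le, Rmax_l|].
    apply (max0_sum_sub_pow_le_fact_esym l k u (INR (x + k)) (pos_INR _) u_range). }
  rewrite u_sum in He. set (N := INR (x + k)) in *. set (s := N * (N + 1) / 2) in *.
  set (e := INR (fact k) * esym k l u) in *.
  assert (U1 : esym_ratio x k (esym k l u) <= (N * (N + 1) / (INR x * INR x)) ^ k).
  { unfold esym_ratio. fold P F e.
    replace ((N * (N + 1) / (INR x * INR x)) ^ k) with (P * 2 ^ k * s ^ k * / (P * INR x ^ k * INR x ^ k))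
      by (unfold s; rewrite !pow_div_distr, !Rpow_mult_distr by nra; field; split; [apply pow_nonzero|]; lra).
    unfold Rdiv. apply Rmult_le_compat.
    - apply Rmult_le_pos; [apply Rmult_le_pos|]; lra.
    - apply Rlt_le, Rinv_0_lt_compat, Rmult_lt_0_compat; lra.
    - apply Rmult_le_compat_l; [apply Rmult_le_pos|]; lra.
    - apply Rinv_le_contravar; [apply Rmult_lt_0_compat; [apply Rmult_lt_0_compat|]; lra|].
      apply Rmult_le_compat_r; lra. }
  assert (U2 : (N * (N + 1) / (INR x * INR x)) ^ k <= (1 + (INR k + 1) / INR x) ^ (2 * k)).
  { rewrite pow_sqr. apply pow_incr.
    split; [apply Rmult_le_pos; [nra | apply Rlt_le, Rinv_0_lt_compat; nra]|].
    replace ((1 + (INR k + 1) / INR x) * (1 + (INR k + 1) / INR x))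
      with ((INR x + INR k + 1) * (INR x + INR k + 1) / (INR x * INR x)) by (field; lra).
    unfold Rdiv. apply Rmult_le_compat_r; [apply Rlt_le, Rinv_0_lt_compat; nra|]. rewrite HN. nra. }
  assert (U4 : 0 <= (INR k + 1) / INR x)
    by (apply Rmult_le_pos; [lra | apply Rlt_le, Rinv_0_lt_compat; lra]).
  assert (U5 : 2 * INR k * ((INR k + 1) / INR x) <= d / 4).
  { apply (Rmult_le_reg_r (INR x)); [lra|].
    replace (2 * INR k * ((INR k + 1) / INR x) * INR x) with (2 * INR k * (INR k + 1)) by (field; lra). nra. }
  assert (U3 := pow_one_add_le ((INR k + 1) / INR x) (2 * k) U4).
  rewrite mult_INR in U3. simpl (INR 2) in U3. specialize (U3 ltac:(lra)). lra.
Qed.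

Lemma esym_ratio_close : 1 - d <= esym_ratio x k (esym k l u) <= 1 + d.
Proof. split; [apply esym_ratio_ge | apply esym_ratio_le]. Qed.

End EsymRatio.

Section PureSums.

Variables (r n p q : nat) (d : R).
Hypothesis q_range : (1 <= q <= n)%nat.
Hypothesis n_le_r : (n <= r)%nat.
Hypothesis p_le : (p <= r - n)%nat.
Hypothesis d_range : 0 < d <= / 9.
Hypothesis p_large : 8 * (INR n + 1) ^ 2 <= INR p * d.
Let a := (r - n - p)%nat.
Hypothesis a_large : 8 * (INR n + 1) ^ 2 <= INR a * d.

Let D := (p + q)%nat.
Let K := C (r - n) p * mu n q r p.
Let e_below := esym (q - 1) (seq 1 (D - 1)) (dist D).
Let e_above := esym (n - q) (seq (S D) (r - D)) (dist D).

Lemma large_ge_n y : 8 * (INR n + 1) ^ 2 <= INR y * d -> (n <= y)%nat.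
Proof. intros Hy. assert (0 <= INR n) by apply pos_INR. apply INR_le.
  apply (Rmult_le_reg_r d); [lra|]. nra. Qed.

Lemma pure_coef_eq :
  pure_coef r n D = INR (fact (r - n)) / (INR (fact (p + (q - 1))) * INR (fact (a + (n - q)))).
Proof. unfold pure_coef. do 4 f_equal; unfold D, a; lia. Qed.

Lemma binom_mu_eq : K = INR (fact (r - n)) * (INR p ^ (q - 1) * INR a ^ (n - q))
                        / (2 ^ n * INR (fact p) * INR (fact a) * INR (fact (q - 1)) * INR (fact (n - q))).
Proof. unfold K, C, mu. fold a. replace (r - p - n)%nat with a by (unfold a; lia).
  field. repeat split; try apply pow_nonzero; try lra; apply not_0_INR, fact_neq_0. Qed.

Lemma binom_mu_pos : 0 < K.
Proof. rewrite binom_mu_eq. assert (Hp := large_ge_n p p_large). assert (Ha := large_ge_n a a_large).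
  assert (0 < INR p) by (apply lt_0_INR; lia). assert (0 < INR a) by (apply lt_0_INR; lia).
  apply Rdiv_lt_0_compat; [apply Rmult_lt_0_compat; [|apply Rmult_lt_0_compat]|];
    repeat apply Rmult_lt_0_compat; try apply pow_lt; try apply lt_0_INR, lt_O_fact; lra. Qed.

Lemma half_sum_pure_entry_eq : sumR (choose (n - 1) (seq 1 r)) (pure_entry r n p q) / 2 =
  K * esym_ratio p (q - 1) e_below * esym_ratio a (n - q) e_above.
Proof. assert (Hp := large_ge_n p p_large). assert (Ha := large_ge_n a a_large).
  assert (0 < INR p) by (apply lt_0_INR; lia). assert (0 < INR a) by (apply lt_0_INR; lia).
  rewrite sumR_pure_entry by auto. fold D e_below e_above. rewrite binom_mu_eq, pure_coef_eq.
  unfold esym_ratio.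
  assert (H2n : 2 ^ n = 2 * 2 ^ (q - 1) * 2 ^ (n - q))
    by (rewrite Rmult_assoc, <- pow_add, tech_pow_Rmult; f_equal; lia).
  rewrite H2n.
  field. repeat split; try apply pow_nonzero; try lra; apply not_0_INR, fact_neq_0. Qed.

Lemma esym_ratio_below_close : 1 - d <= esym_ratio p (q - 1) e_below <= 1 + d.
Proof. assert (Hp := large_ge_n p p_large). assert (0 <= INR (q - 1)) by apply pos_INR.
  assert (INR (q - 1) <= INR n) by (apply le_INR; lia).
  unfold e_below. replace (D - 1)%nat with (p + (q - 1))%nat by (unfold D; lia).
  apply esym_ratio_close; [lia | lra | nra | |].
  - intros j Hj. apply in_seq in Hj. unfold dist, D.
    assert (INR j <= INR (p + q)) by (apply le_INR; lia).
    assert (INR (p + q) - INR j <= INR (p + (q - 1)))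
      by (rewrite <- minus_INR by lia; apply le_INR; lia).
    rewrite Rabs_minus_sym, Rabs_right; lra.
  - rewrite <- (sumR_dist_below 1 (p + (q - 1))). apply sumR_ext.
    intros j Hj. apply in_seq in Hj. unfold dist, D.
    replace (1 + (p + (q - 1)))%nat with (p + q)%nat by lia.
    assert (INR j <= INR (p + q)) by (apply le_INR; lia). rewrite Rabs_minus_sym, Rabs_right; lra.
Qed.

Lemma esym_ratio_above_close : 1 - d <= esym_ratio a (n - q) e_above <= 1 + d.
Proof. assert (Ha := large_ge_n a a_large). assert (0 <= INR (n - q)) by apply pos_INR.
  assert (INR (n - q) <= INR n) by (apply le_INR; lia).
  unfold e_above. replace (r - D)%nat with (a + (n - q))%nat by (unfold D, a; lia).
  apply esym_ratio_close; [lia | lra | nra | |].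
  - intros j Hj. apply in_seq in Hj. unfold dist.
    assert (INR D <= INR j) by (apply le_INR; lia).
    assert (INR j - INR D <= INR (a + (n - q))) by (rewrite <- minus_INR by lia; apply le_INR; lia).
    rewrite Rabs_right; lra.
  - rewrite <- (sumR_dist_above D (a + (n - q))). apply sumR_ext.
    intros j Hj. apply in_seq in Hj. unfold dist.
    assert (INR D <= INR j) by (apply le_INR; lia). rewrite Rabs_right; lra.
Qed.

Lemma half_sum_pure_entry_close :
  Rabs (sumR (choose (n - 1) (seq 1 r)) (pure_entry r n p q) / 2 - K) <= 3 * d * K /\
  sumR (choose (n - 1) (seq 1 r)) (pure_entry r n p q) / 2 <= 2 * K.
Proof. rewrite half_sum_pure_entry_eq. assert (HK := binom_mu_pos).
  assert (G1 := esym_ratio_below_close). assert (G2 := esym_ratio_above_close).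
  set (g1 := esym_ratio p (q - 1) e_below) in *. set (g2 := esym_ratio a (n - q) e_above) in *.
  assert (Hg : (1 - d) * (1 - d) <= g1 * g2 <= (1 + d) * (1 + d)) by (split; apply Rmult_le_compat; lra).
  split.
  - replace (K * g1 * g2 - K) with (K * (g1 * g2 - 1)) by ring.
    rewrite Rabs_mult, Rabs_right by lra. replace (3 * d * K) with (K * (3 * d)) by ring.
    apply Rmult_le_compat_l; [lra|]. apply Rabs_le; nra.
  - replace (K * g1 * g2) with (K * (g1 * g2)) by ring. rewrite (Rmult_comm 2).
    apply Rmult_le_compat_l; nra.
Qed.

Hypothesis r_pow_small : 2 ^ n * INR (fact (q - 1)) * INR (fact (n - q)) * INR r ^ (n - 1) <=
  d * INR p ^ (2 * (q - 1)) * INR a ^ (2 * (n - q)).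

Lemma pure_coef_mul_pow_le : pure_coef r n D * INR r ^ (n - 1) <= d * K.
Proof. assert (Hp := large_ge_n p p_large). assert (Ha := large_ge_n a a_large).
  assert (0 < INR p) by (apply lt_0_INR; lia). assert (0 < INR a) by (apply lt_0_INR; lia).
  destruct (fact_add_bounds p (q - 1)) as [Fb1 _]. destruct (fact_add_bounds a (n - q)) as [Fb2 _].
  assert (Ef : forall m, 0 < INR (fact m)) by (intros; apply lt_0_INR, lt_O_fact).
  assert (0 < INR p ^ (q - 1)) by (apply pow_lt; lra). assert (0 < INR a ^ (n - q)) by (apply pow_lt; lra).
  assert (0 < 2 ^ n) by (apply pow_lt; lra). assert (0 <= INR r ^ (n - 1)) by (apply pow_le, pos_INR).
  set (X := INR (fact p) * INR p ^ (q - 1) * (INR (fact a) * INR a ^ (n - q))).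
  assert (HX : 0 < X) by (unfold X; repeat apply Rmult_lt_0_compat; auto).
  rewrite pure_coef_eq.
  apply Rle_trans with (INR (fact (r - n)) / X * INR r ^ (n - 1)).
  { apply Rmult_le_compat_r; auto. apply Rmult_le_compat_l; [apply Rlt_le, Ef|].
    apply Rinv_le_contravar; auto. unfold X.
    apply Rmult_le_compat; auto; apply Rmult_le_pos; (apply Rlt_le, Ef || apply pow_le; lra). }
  rewrite binom_mu_eq.
  replace (2 * (q - 1))%nat with (q - 1 + (q - 1))%nat in r_pow_small by lia.
  replace (2 * (n - q))%nat with (n - q + (n - q))%nat in r_pow_small by lia.
  rewrite !pow_add in r_pow_small.
  set (den := 2 ^ n * INR (fact (q - 1)) * INR (fact (n - q))) in *.
  assert (Hden : 0 < den) by (unfold den; repeat apply Rmult_lt_0_compat; auto).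
  replace (d * (INR (fact (r - n)) * (INR p ^ (q - 1) * INR a ^ (n - q))
                / (2 ^ n * INR (fact p) * INR (fact a) * INR (fact (q - 1)) * INR (fact (n - q)))))
    with (INR (fact (r - n)) / X * (d * (INR p ^ (q - 1) * INR p ^ (q - 1))
                                      * (INR a ^ (n - q) * INR a ^ (n - q)) / den))
    by (unfold X, den; field; repeat split; apply Rgt_not_eq; unfold Rgt; auto).
  apply Rmult_le_compat_l; [apply Rlt_le, Rdiv_lt_0_compat; auto|].
  apply (Rmult_le_reg_r den); [lra|].
  unfold Rdiv at 1. rewrite Rmult_assoc, Rinv_l, Rmult_1_r by lra. lra.
Qed.

End PureSums.

Lemma prob_dev_event_le r n p q d eps : (1 <= q <= n)%nat -> (n <= r)%nat -> (p <= r - n)%nat ->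
  0 < d <= / 9 -> 0 < eps ->
  8 * (INR n + 1) ^ 2 <= INR p * d -> 8 * (INR n + 1) ^ 2 <= INR (r - n - p) * d ->
  2 ^ n * INR (fact (q - 1)) * INR (fact (n - q)) * INR r ^ (n - 1) <=
    d * INR p ^ (2 * (q - 1)) * INR (r - n - p) ^ (2 * (n - q)) ->
  exists l, is_prob (length (subsets_r r n)) (dev_event r n p q eps) l /\ l <= 4 * d / (3 * eps ^ 2).
Proof. intros Hq Hr Hp Hd He HP HA Hpow.
  assert (HK := binom_mu_pos r n p q d Hq Hr Hp Hd HP HA).
  destruct (half_sum_pure_entry_close r n p q d Hq Hr Hp Hd HP HA) as [Hclose Hhalf].
  assert (Hmax := pure_coef_mul_pow_le r n p q d Hq Hr Hp Hd HP HA Hpow).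
  set (K := C (r - n) p * mu n q r p) in *. set (S := subsets_r r n).
  set (w := fun j => pure_entry r n p q (nth j S [])).
  destruct (prob_rel_dev_chebyshev (length S) w (betti_rand r n p q) (dev_event r n p q eps) K eps)
    as [l [Hl Hlb]]; auto.
  { intros j; apply pure_entry_nonneg. }
  { intros m g Hg. unfold betti_rand. cbv zeta. fold S. rewrite <- Hg. apply grid_comb_grid_point. }
  exists l. split; [exact Hl|]. eapply Rle_trans; [exact Hlb|].
  assert (ESw : sumR (seq 0 (length S)) w = sumR (choose (n - 1) (seq 1 r)) (pure_entry r n p q))
    by (unfold w; now rewrite (sumR_nth _ [])).
  rewrite ESw. set (sw := sumR (choose (n - 1) (seq 1 r)) (pure_entry r n p q)) in *.
  assert (Hsw : 0 <= sw) by (apply sumR_nonneg; intros; apply pure_entry_nonneg).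
  assert (HV : sumR (seq 0 (length S)) (fun j => w j ^ 2) <= d * K * sw).
  { rewrite <- ESw, <- sumR_scal. apply sumR_le. intros j Hj. apply in_seq in Hj.
    assert (HI : In (nth j S []) (choose (n - 1) (seq 1 r)))
      by (change (choose (n - 1) (seq 1 r)) with S; apply nth_In; lia).
    assert (W1 := pure_entry_nonneg r n p q (nth j S [])).
    assert (W2 := pure_entry_le r n p q (nth j S []) Hq Hr Hp HI).
    fold (w j) in W1, W2. simpl. nra. }
  assert (Q1 : (sw / 2 - K) ^ 2 <= (3 * d * K) ^ 2)
    by (rewrite <- pow2_abs; apply pow_incr; split; [apply Rabs_pos | auto]).
  assert (HeK : 0 < (eps * K) ^ 2) by (apply pow_lt; nra).
  assert (0 < eps ^ 2) by (apply pow_lt; lra).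
  apply (Rmult_le_reg_r ((eps * K) ^ 2)); [lra|].
  unfold Rdiv at 1. rewrite Rmult_assoc, Rinv_l, Rmult_1_r by lra.
  replace (4 * d / (3 * eps ^ 2) * (eps * K) ^ 2) with (4 * d / 3 * K ^ 2) by (field; lra).
  assert (Q2 : (3 * d * K) ^ 2 <= d * K ^ 2).
  { replace ((3 * d * K) ^ 2) with (9 * d * (d * K ^ 2)) by ring.
    assert (0 < d * K ^ 2) by (apply Rmult_lt_0_compat; [lra | apply pow_lt; lra]). nra. }
  assert (Q3 : d * K * sw <= d * K * (4 * K)) by (apply Rmult_le_compat_l; nra).
  lra.
Qed.

Lemma mul_pow_le_of_ratio_bounds k1 k2 c d R P A B : (1 <= k1 + k2)%nat ->
  0 < c -> 0 < R -> 0 <= d -> c * R / 2 <= P -> c * R / 2 <= A ->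
  1 <= c * c * R / 4 -> B <= d * (c * c * R / 4) ->
  B * R ^ (k1 + k2) <= d * P ^ (2 * k1) * A ^ (2 * k2).
Proof. intros Hk Hc HR Hd HP HA H1 HB. set (h := c * R / 2) in *. assert (Hh : 0 < h) by (unfold h; nra).
  assert (E1 : h ^ (2 * k1) <= P ^ (2 * k1)) by (apply pow_incr; lra).
  assert (E2 : h ^ (2 * k2) <= A ^ (2 * k2)) by (apply pow_incr; lra).
  assert (E3 : h ^ (2 * k1) * h ^ (2 * k2) = R ^ (k1 + k2) * (c * c * R / 4) ^ (k1 + k2)).
  { rewrite <- pow_add, <- Nat.mul_add_distr_l, pow_sqr, <- Rpow_mult_distr. f_equal. unfold h. field. }
  assert (E4 : c * c * R / 4 <= (c * c * R / 4) ^ (k1 + k2)).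
  { destruct (k1 + k2)%nat as [|k]; [lia|]. simpl. rewrite <- (Rmult_1_r (c * c * R / 4)) at 1.
    apply Rmult_le_compat_l; [lra | now apply pow_R1_Rle]. }
  assert (0 < R ^ (k1 + k2)) by (apply pow_lt; lra).
  assert (0 <= h ^ (2 * k1)) by (apply pow_le; lra). assert (0 <= h ^ (2 * k2)) by (apply pow_le; lra).
  assert (E5 : h ^ (2 * k1) * h ^ (2 * k2) <= P ^ (2 * k1) * A ^ (2 * k2)) by (apply Rmult_le_compat; auto).
  apply Rle_trans with (d * (R ^ (k1 + k2) * (c * c * R / 4) ^ (k1 + k2))).
  - apply Rle_trans with (d * (c * c * R / 4) * R ^ (k1 + k2)); [apply Rmult_le_compat_r; lra|].
    replace (d * (R ^ (k1 + k2) * (c * c * R / 4) ^ (k1 + k2)))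
      with (d * (c * c * R / 4) ^ (k1 + k2) * R ^ (k1 + k2)) by ring.
    apply Rmult_le_compat_r; [lra|]. apply Rmult_le_compat_l; lra.
  - rewrite <- E3, Rmult_assoc. apply Rmult_le_compat_l; lra.
Qed.

Lemma Rdiv_nonneg x y : 0 <= x -> 0 < y -> 0 <= x / y.
Proof. intros Hx Hy. apply Rmult_le_pos; [exact Hx | apply Rlt_le, Rinv_0_lt_compat, Hy]. Qed.

Lemma Rdiv_le_mul x y z : 0 < y -> x / y <= z -> x <= y * z.
Proof. intros Hy H. apply (Rmult_le_compat_l y) in H; [|lra].
  replace (y * (x / y)) with x in H by (field; lra). exact H. Qed.

Lemma large_r_conditions n q c d : (2 <= n)%nat -> (1 <= q <= n)%nat -> 0 < c -> c < / 2 -> 0 < d ->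
  exists R0 : nat, forall r p, (R0 <= r)%nat -> (n <= r)%nat -> (p <= r - n)%nat ->
    c <= INR p / INR r <= 1 - c ->
    8 * (INR n + 1) ^ 2 <= INR p * d /\ 8 * (INR n + 1) ^ 2 <= INR (r - n - p) * d /\
    2 ^ n * INR (fact (q - 1)) * INR (fact (n - q)) * INR r ^ (n - 1) <=
      d * INR p ^ (2 * (q - 1)) * INR (r - n - p) ^ (2 * (n - q)).
Proof. intros Hn Hq Hc0 Hc1 Hd.
  set (B := 2 ^ n * INR (fact (q - 1)) * INR (fact (n - q))).
  assert (HB : 0 < B)
    by (unfold B; repeat apply Rmult_lt_0_compat; try apply pow_lt; try apply lt_0_INR, lt_O_fact; lra).
  assert (Hn0 : 2 <= INR n) by (apply (le_INR 2); lia).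
  assert (Hcc : 0 < c * c) by nra. assert (Hcd : 0 < c * d) by nra. assert (Hccd : 0 < c * c * d) by nra.
  set (T1 := 2 * INR n / c). set (T2 := 16 * (INR n + 1) ^ 2 / (c * d)).
  set (T3 := 4 / (c * c)). set (T4 := 4 * B / (c * c * d)).
  assert (0 <= T1) by (apply Rdiv_nonneg; lra). assert (0 <= T2) by (apply Rdiv_nonneg; [nra | lra]).
  assert (0 <= T3) by (apply Rdiv_nonneg; lra). assert (0 <= T4) by (apply Rdiv_nonneg; lra).
  destruct (INR_unbounded (T1 + T2 + T3 + T4)) as [R0 HR0].
  exists R0. intros r p Hr0 Hnr Hp [Hpc1 Hpc2].
  assert (HR : T1 + T2 + T3 + T4 < INR r) by (apply Rlt_le_trans with (INR R0); [lra | apply le_INR; auto]).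
  set (R := INR r) in *. assert (HRpos : 0 < R) by lra.
  assert (HcP : c * R <= INR p) by (apply (Rmult_le_compat_r R) in Hpc1; [|lra]; unfold Rdiv in Hpc1;
    rewrite Rmult_assoc, Rinv_l, Rmult_1_r in Hpc1 by lra; lra).
  assert (HPc : INR p <= (1 - c) * R) by (apply (Rmult_le_compat_r R) in Hpc2; [|lra]; unfold Rdiv in Hpc2;
    rewrite Rmult_assoc, Rinv_l, Rmult_1_r in Hpc2 by lra; lra).
  assert (HA : INR (r - n - p) = R - INR n - INR p) by (rewrite !minus_INR by lia; reflexivity).
  assert (U1 : 2 * INR n <= c * R) by (apply Rdiv_le_mul; [lra | unfold T1 in *; lra]).
  assert (U2 : 16 * (INR n + 1) ^ 2 <= c * d * R) by (apply Rdiv_le_mul; [lra | unfold T2 in *; lra]).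
  assert (U3 : 4 <= c * c * R) by (apply Rdiv_le_mul; [lra | unfold T3 in *; lra]).
  assert (U4 : 4 * B <= c * c * d * R) by (apply Rdiv_le_mul; [lra | unfold T4 in *; lra]).
  assert (HhP : c * R / 2 <= INR p) by lra. assert (HhA : c * R / 2 <= INR (r - n - p)) by lra.
  split; [|split].
  - assert (c * d * R / 2 <= INR p * d) by (replace (c * d * R / 2) with (c * R / 2 * d) by field;
      apply Rmult_le_compat_r; lra). lra.
  - assert (c * d * R / 2 <= INR (r - n - p) * d) by (replace (c * d * R / 2) with (c * R / 2 * d) by field;
      apply Rmult_le_compat_r; lra). lra.
  - replace (n - 1)%nat with (q - 1 + (n - q))%nat by lia. fold B.
    apply mul_pow_le_of_ratio_bounds with (c := c); try lra; lia.
Qed.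

Theorem mainTheorem5 (n q : nat) (c : R)
  (hn : (2 <= n)%nat) (hq1 : (1 <= q)%nat) (hqn : (q <= n)%nat)
  (hc0 : 0 < c) (hc1 : c < / 2) :
  forall eps eta : R, 0 < eps -> 0 < eta ->
  exists R0 : nat, forall r p : nat,
    (R0 <= r)%nat -> (n <= r)%nat -> (p <= r - n)%nat ->
    c <= INR p / INR r <= 1 - c ->
    exists l : R,
      is_prob (length (subsets_r r n)) (dev_event r n p q eps) l /\ l < eta.
Proof.
  intros eps eta He Heta.
  assert (He2 : 0 < eps ^ 2) by (apply pow_lt; lra).
  set (d := Rmin (/ 9) (eta * eps ^ 2 / 2)).
  assert (Hd : 0 < d <= / 9).
  { split; [apply Rmin_glb_lt; [lra | apply Rdiv_lt_0_compat; nra] | apply Rmin_l]. }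
  assert (Hd2 : d <= eta * eps ^ 2 / 2) by apply Rmin_r.
  destruct (large_r_conditions n q c d hn ltac:(lia) hc0 hc1 ltac:(lra)) as [R0 HR0].
  exists R0. intros r p Hr0 Hnr Hp Hpc.
  destruct (HR0 r p Hr0 Hnr Hp Hpc) as [HP [HA Hpow]].
  destruct (prob_dev_event_le r n p q d eps ltac:(lia) Hnr Hp Hd He HP HA Hpow) as [l [Hl Hle]].
  exists l. split; [exact Hl|].
  eapply Rle_lt_trans; [exact Hle|].
  apply (Rmult_lt_reg_r (3 * eps ^ 2)); [lra|].
  unfold Rdiv. rewrite Rmult_assoc, Rinv_l by lra. nra.
Qed.
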